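(* Let $k\ge 2$ and $\lambda\ge \frac{1}{3k}$, and consider the common-chunk-protocol Markov process. Let $C=108\,e\,k^3$ and define on the state space \[ L(\mathbf{x}) \;=\; C\sum_{i=1}^k \bar S_i \;+\; \sum_{i=1}^k \frac{S}{e^{S_i}} \;+\; \frac{S}{e^{S_0}} . \] Then there exists $\epsilon>0$ such that $\Delta L(\mathbf{x})<-\epsilon$ for every state $\mathbf{x}$ with \[ S \;>\; 4Ck\,\exp\!\Big(3C\lambda k^2 e^{6\lambda k^4}\Big). \]
   Context: Model: Fix an integer $k\ge 2$ (number of chunks of a file) and $\lambda>0$. There is always exactly one seed holding all $k$ chunks. Non-seed peers arrive according to a Poisson process of rate $\lambda$, each arriving with no chunks; each non-seed peer holds a subset (its profile) of $\{1,\dots,k\}$ and leaves the system immediately once it holds all $k$ chunks. The state $\mathbf{x}$ of the continuous-time Markov process is the number of non-seed peers with each profile. $S$ denotes the total number of peers present, including the seed. Each non-seed peer has an independent rate-1 Poisson clock; at each tick it draws a sample of peers independently and uniformly at random with replacement from the current $S$ peers (seed and itself included) and may instantaneously download at most one chunk that it lacks and that is held by some sampled peer (such a chunk is a ''match''). Counting draws with multiplicity, a chunk is ''rare'' in a sample of 3 draws if exactly one of the 3 draws holds it. Common chunk protocol: (i) a peer with no chunks draws 3 peers and downloads a chunk chosen uniformly among the rare matches, if there is any, otherwise nothing; (ii) a peer holding at least 1 and at most $k-2$ chunks draws 1 peer and downloads a uniformly chosen match, if any, otherwise nothing; (iii) a peer holding exactly $k-1$ chunks draws 3 peers and downloads its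 missing chunk only if that chunk is held by some draw and every chunk it holds is held by at least 2 of the 3 draws; otherwise nothing. Notation: $S_i$ ($1\le i\le k$) is the number of peers, including the seed, holding chunk $i$; $S_0$ is the number of peers holding no chunks; $\bar S_i=S-S_i$. For a function $f$ on the state space, with $q(\mathbf{x},\mathbf{x}')$ the transition rates of the Markov process, the drift is $\Delta f(\mathbf{x})=\sum_{\mathbf{x}'\neq\mathbf{x}} q(\mathbf{x},\mathbf{x}')\,(f(\mathbf{x}')-f(\mathbf{x}))$. *)

From Stdlib Require Import Reals List Arith Bool.
Import ListNotations.
Open Scope R_scope.

(* A profile is a list of k booleans; entry j (0-based, j < k) tells whether
   chunk j+1 is held.  Chunks are indexed 0..k-1 here instead of 1..k. *)
Definition profile := list bool.

Fixpoint allp (k : nat) : list profile :=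
  match k with
  | O => [nil]
  | S n => map (cons true) (allp n) ++ map (cons false) (allp n)
  end.

Definition holds (B : profile) (i : nat) : bool := nth i B false.
Definition nchunks (B : profile) : nat := length (filter (fun b => b) B).
Definition is_full (B : profile) : bool := forallb (fun b => b) B.
Definition empty_prof (k : nat) : profile := repeat false k.

(* A state: number of non-seed peers with each (non-full) profile.
   Values at the full profile (and at lists of length <> k) are ignored. *)
Definition state := profile -> nat.

(* Number of peers (seed included) with profile B: the full profile is held
   exactly by the seed (non-seed peers holding everything leave at once). *)
Definition npeers (x : state) (B : profile) : nat :=
  if is_full B then 1%nat else x B.

Definition sumn_l {A : Type} (f : A -> nat) (l : list A) : nat :=
  fold_right (fun a s => (f a + s)%nat) 0%nat l.
Definition rsum {A : Type} (f : A -> R) (l : list A) : R :=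
  fold_right (fun a s => f a + s) 0 l.

Definition Stot (k : nat) (x : state) : nat := sumn_l (npeers x) (allp k).
Definition Schunk (k : nat) (x : state) (i : nat) : nat :=
  sumn_l (fun B => if holds B i then npeers x B else 0%nat) (allp k).
Definition S0 (k : nat) (x : state) : nat := x (empty_prof k).

Definition Cconst (k : nat) : R := 108 * exp 1 * INR k ^ 3.

Definition Lyap (k : nat) (x : state) : R :=
  Cconst k * rsum (fun i => INR (Stot k x) - INR (Schunk k x i)) (seq 0 k)
  + rsum (fun i => INR (Stot k x) / exp (INR (Schunk k x i))) (seq 0 k)
  + INR (Stot k x) / exp (INR (S0 k x)).

Definition prof_eqb (A B : profile) : bool :=
  if list_eq_dec bool_dec A B then true else false.
Definition add_peer (x : state) (A : profile) : state :=
  fun B => if prof_eqb B A then (x B + 1)%nat else x B.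
Definition rem_peer (x : state) (A : profile) : state :=
  fun B => if prof_eqb B A then (x B - 1)%nat else x B.
Fixpoint set_true (A : profile) (i : nat) : profile :=
  match A, i with
  | nil, _ => nil
  | _ :: A', O => true :: A'
  | b :: A', S i' => b :: set_true A' i'
  end.
Definition move (x : state) (A : profile) (i : nat) : state :=
  let A' := set_true A i in
  if is_full A' then rem_peer x A else add_peer (rem_peer x A) A'.

(* probability that a uniformly drawn peer (with replacement, among all S
   peers, seed and self included) has profile B *)
Definition w (k : nat) (x : state) (B : profile) : R :=
  INR (npeers x B) / INR (Stot k x).

Definition cnt3 (B1 B2 B3 : profile) (j : nat) : nat :=
  ((if holds B1 j then 1 else 0) + (if holds B2 j then 1 else 0)
   + (if holds B3 j then 1 else 0))%nat.
Definition rare3 (B1 B2 B3 : profile) (j : nat) : bool := Nat.eqb (cnt3 B1 B2 B3 j) 1.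
Definition nrare (k : nat) (B1 B2 B3 : profile) : nat :=
  length (filter (rare3 B1 B2 B3) (seq 0 k)).

Definition sum3 (k : nat) (f : profile -> profile -> profile -> R) : R :=
  rsum (fun B1 => rsum (fun B2 => rsum (fun B3 => f B1 B2 B3) (allp k)) (allp k)) (allp k).

(* rule (i): peer with no chunks; draws 3, downloads a uniformly chosen rare match *)
Definition p_empty (k : nat) (x : state) (i : nat) : R :=
  sum3 k (fun B1 B2 B3 => w k x B1 * w k x B2 * w k x B3 *
    (if rare3 B1 B2 B3 i then / INR (nrare k B1 B2 B3) else 0)).

(* rule (ii): 1 <= |A| <= k-2; draws 1, downloads a uniformly chosen match *)
Definition nmatch (k : nat) (A B : profile) : nat :=
  length (filter (fun j => holds B j && negb (holds A j)) (seq 0 k)).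
Definition p_mid (k : nat) (x : state) (A : profile) (i : nat) : R :=
  rsum (fun B => w k x B *
    (if holds B i && negb (holds A i) then / INR (nmatch k A B) else 0)) (allp k).

(* rule (iii): |A| = k-1; draws 3; downloads the missing chunk i iff it is held
   by some draw and every held chunk is held by at least 2 of the 3 draws *)
Definition p_last (k : nat) (x : state) (A : profile) (i : nat) : R :=
  sum3 k (fun B1 B2 B3 => w k x B1 * w k x B2 * w k x B3 *
    (if negb (holds A i) && (holds B1 i || holds B2 i || holds B3 i)
        && forallb (fun j => negb (holds A j) || Nat.leb 2 (cnt3 B1 B2 B3 j)) (seq 0 k)
     then 1 else 0)).

(* probability that a clock tick of a peer with (non-full) profile A results in
   downloading chunk i *)
Definition p_dl (k : nat) (x : state) (A : profile) (i : nat) : R :=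
  let c := nchunks A in
  if Nat.eqb c 0 then p_empty k x i
  else if Nat.leb c (k - 2) then p_mid k x A i
  else p_last k x A i.

(* Drift  Delta f(x) = sum_{x' <> x} q(x,x') (f(x') - f(x)).  The possible
   transitions are: arrival (rate lam) of an empty peer, and, for each non-full
   profile A and chunk i not in A, a peer of profile A downloading i, at rate
   x_A * p_dl(A,i).  These transitions lead to pairwise distinct states x' <> x
   (when their rate is nonzero), so the sum over events equals the sum over x'. *)
Definition drift (k : nat) (lam : R) (f : state -> R) (x : state) : R :=
  lam * (f (add_peer x (empty_prof k)) - f x)
  + rsum (fun A => if is_full A then 0 else
       rsum (fun i => if holds A i then 0 else
               INR (x A) * p_dl k x A i * (f (move x A i) - f x)) (seq 0 k))
     (allp k).

From Stdlib Require Import Reals List Arith Bool Lra Lia Psatz Classical.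
Import ListNotations.
Open Scope R_scope.

(* Write n = S, s_j = S_j, s_0 = S_0, q_j = s_j / n, a_j = n e^{-s_j} and
   a_0 = n e^{-s_0}, so that L = C sum_j (n - s_j) + sum_j a_j + a_0.
   1. Jumps of L: an arrival raises L by at most Ck + k + 1 - (1 - 1/e) a_0; a
      download of chunk i that does not complete the peer lowers L by
      C + (1 - 1/e) a_i, minus (e - 1) a_0 if the peer was empty; a completing
      download lowers L by at least C minus (e - 1) sum_{held j} a_j.
   2. Summing against the rates:
        Delta L <= lam(Ck + k + 1 - (1-1/e) a_0) - C R + (e-1) a_0 S_0 P_0
                   - (1-1/e) N + (e-1) E,
      with R the total download rate, P_0 the success probability of an empty
      peer, N = S_0 sum_i p_i a_i and E the completion penalty.
   3. Sampling estimates (the draws are independent): P_0 <= sum_i 3q_i(1-q_i)^2,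
      p_i >= 3q_i(1-q_i)^2 / k, peers lacking j download at rate
      >= q_j M_j + 3 q_j Q_j^3 / n^2, and E <= 81 k^2 / n.
   4. The term (e-1) a_0 S_0 P_0 is absorbed into half the arrival gain, half of
      C R, and 1 (case analysis on S_0 P_0 and a cubic inequality).
   5. For S above the threshold, either a_0 is large, or S_0 is large and then a
      rare chunk makes N large or all chunks are common and R is large; each
      case gives Delta L <= -1. *)

Lemma rsum_map {A B} (f : B -> R) (g : A -> B) l :
  rsum f (map g l) = rsum (fun a => f (g a)) l.
Proof. induction l; simpl; [lra | rewrite IHl; lra]. Qed.

Lemma rsum_ext {A} (f g : A -> R) l :
  (forall a, In a l -> f a = g a) -> rsum f l = rsum g l.
Proof. induction l; simpl; intros H; [lra |]. rewrite H, IHl; auto. Qed.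

Lemma rsum_le {A} (f g : A -> R) l :
  (forall a, In a l -> f a <= g a) -> rsum f l <= rsum g l.
Proof.
  induction l; simpl; intros H; [lra |].
  specialize (IHl (fun a H1 => H a (or_intror H1))).
  specialize (H a (or_introl eq_refl)). lra.
Qed.

Lemma rsum_plus {A} (f g : A -> R) l :
  rsum (fun a => f a + g a) l = rsum f l + rsum g l.
Proof. induction l; simpl; [lra | rewrite IHl; lra]. Qed.

Lemma rsum_minus {A} (f g : A -> R) l :
  rsum (fun a => f a - g a) l = rsum f l - rsum g l.
Proof. induction l; simpl; [lra | rewrite IHl; lra]. Qed.

Lemma rsum_scal {A} c (f : A -> R) l : rsum (fun a => c * f a) l = c * rsum f l.
Proof. induction l; simpl; [lra | rewrite IHl; lra]. Qed.

Lemma rsum_scalr {A} c (f : A -> R) l : rsum (fun a => f a * c) l = rsum f l * c.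
Proof. induction l; simpl; [lra | rewrite IHl; lra]. Qed.

Lemma rsum_zero {A} (l : list A) : rsum (fun _ => 0) l = 0.
Proof. induction l; simpl; [lra | rewrite IHl; lra]. Qed.

Lemma rsum_nonneg {A} (f : A -> R) l : (forall a, In a l -> 0 <= f a) -> 0 <= rsum f l.
Proof. intros H. rewrite <- (rsum_zero l). apply rsum_le. auto. Qed.

Lemma rsum_const {A} c (l : list A) : rsum (fun _ => c) l = INR (length l) * c.
Proof.
  induction l as [|a l IH]; [simpl; lra |].
  change (c + rsum (fun _ => c) l = INR (S (length l)) * c).
  rewrite IH, S_INR. lra.
Qed.

Lemma INR_sumn_l {A} (f : A -> nat) l : INR (sumn_l f l) = rsum (fun a => INR (f a)) l.
Proof. induction l; simpl; [reflexivity |]. rewrite plus_INR, IHl; reflexivity. Qed.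

Lemma rsum_ge_term {A} (f : A -> R) l a :
  (forall b, In b l -> 0 <= f b) -> In a l -> f a <= rsum f l.
Proof.
  induction l; simpl; intros H Ha; [contradiction |]. destruct Ha as [<- | Ha].
  - assert (0 <= rsum f l) by (apply rsum_nonneg; auto). lra.
  - assert (f a <= rsum f l) by (apply IHl; auto).
    specialize (H a0 (or_introl eq_refl)). lra.
Qed.

Lemma rsum_swap {A B} (f : A -> B -> R) l1 l2 :
  rsum (fun a => rsum (fun b => f a b) l2) l1 = rsum (fun b => rsum (fun a => f a b) l1) l2.
Proof.
  induction l1; simpl.
  - rewrite rsum_zero; reflexivity.
  - rewrite IHl1, <- rsum_plus. reflexivity.
Qed.

Lemma rsum_le_max_term (f : nat -> R) k : (1 <= k)%nat ->
  exists i, (i < k)%nat /\ rsum f (seq 0 k) <= INR k * f i.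
Proof.
  intros Hk.
  assert (Hmax : forall l : list nat, l <> [] ->
            exists i, In i l /\ forall j, In j l -> f j <= f i).
  { induction l as [|a l IH]; intros Hl; [congruence |]. destruct l as [|b l'].
    - exists a; split; [left; auto |]. intros j [<- | []]; lra.
    - destruct IH as [i [Hi Hm]]; [congruence |].
      destruct (Rle_dec (f a) (f i)).
      + exists i; split; [right; auto |]. intros j [<- | Hj]; auto.
      + exists a; split; [left; auto |]. intros j [<- | Hj]; [lra |].
        specialize (Hm j Hj); lra. }
  destruct (Hmax (seq 0 k)) as [i [Hi Hm]]; [destruct k; [lia | discriminate] |].
  exists i; split; [apply in_seq in Hi; lia |].
  replace (INR k) with (INR (length (seq 0 k))) by (rewrite length_seq; auto).
  rewrite <- rsum_const. apply rsum_le. auto.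
Qed.

Lemma rsum_delta_nat (f : nat -> R) i k : (i < k)%nat ->
  rsum (fun l => if Nat.eqb l i then f l else 0) (seq 0 k) = f i.
Proof.
  intros Hi. assert (Hn := seq_NoDup k 0).
  assert (Hin : In i (seq 0 k)) by (apply in_seq; lia). clear Hi.
  induction (seq 0 k) as [|a l IH]; [contradiction |]. simpl. inversion Hn; subst.
  destruct Hin as [<- | Hin].
  - rewrite Nat.eqb_refl, (rsum_ext _ (fun _ => 0)), rsum_zero; [lra |].
    intros b Hb. destruct (Nat.eqb_spec b a); [subst; contradiction | auto].
  - destruct (Nat.eqb_spec a i); [subst; contradiction |]. rewrite IH; auto; lra.
Qed.

Definition ind (b : bool) : R := if b then 1 else 0.

Lemma ind_0_1 b : 0 <= ind b <= 1.
Proof. destruct b; simpl; lra. Qed.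

Lemma len_filter_R {T} (p : T -> bool) l : INR (length (filter p l)) = rsum (fun i => ind (p i)) l.
Proof.
  induction l; simpl; auto.
  destruct (p a); simpl length; [rewrite S_INR |]; rewrite IHl; simpl; lra.
Qed.

Lemma inv_INR_nonneg m : 0 <= / INR m.
Proof. destruct m; [simpl; rewrite Rinv_0; lra |]. left. apply Rinv_0_lt_compat, lt_0_INR; lia. Qed.

Lemma inv_INR_le1 m : / INR m <= 1.
Proof.
  destruct m; [simpl; rewrite Rinv_0; lra |]. rewrite <- Rinv_1.
  apply Rinv_le_contravar; [lra |]. rewrite S_INR. assert (H := pos_INR m). lra.
Qed.

(* Choosing uniformly among the indices satisfying p: the probabilities
   1/#{p} add up to #{p}/#{p}, which is 1 as soon as some index satisfies p. *)
Lemma rsum_uniform_choice (p : nat -> bool) l :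
  rsum (fun i => if p i then / INR (length (filter p l)) else 0) l =
  INR (length (filter p l)) * / INR (length (filter p l)).
Proof.
  set (m := INR (length (filter p l))).
  transitivity (rsum (fun i => ind (p i)) l * / m); [| unfold m; rewrite len_filter_R; reflexivity].
  rewrite <- rsum_scalr. apply rsum_ext. intros; unfold ind. destruct (p a); ring.
Qed.

Lemma count_inv_eq1 (p : nat -> bool) k j : (j < k)%nat -> p j = true ->
  INR (length (filter p (seq 0 k))) * / INR (length (filter p (seq 0 k))) = 1.
Proof.
  intros Hj Hp. apply Rinv_r. apply not_0_INR. intros E.
  assert (In j (filter p (seq 0 k))) by (apply filter_In; split; auto; apply in_seq; lia).
  apply length_zero_iff_nil in E. rewrite E in H. contradiction.
Qed.

Lemma prof_eqb_spec A B : prof_eqb A B = true <-> A = B.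
Proof. unfold prof_eqb. destruct (list_eq_dec bool_dec A B); split; congruence. Qed.

Lemma prof_eqb_refl A : prof_eqb A A = true.
Proof. apply prof_eqb_spec; auto. Qed.

Lemma prof_eqb_neq A B : A <> B -> prof_eqb A B = false.
Proof. intros H. destruct (prof_eqb A B) eqn:E; auto. apply prof_eqb_spec in E; congruence. Qed.

Lemma prof_eqb_sym A B : prof_eqb A B = prof_eqb B A.
Proof.
  destruct (prof_eqb A B) eqn:E; symmetry.
  - apply prof_eqb_spec in E; subst; apply prof_eqb_refl.
  - apply prof_eqb_neq. intros ->. rewrite prof_eqb_refl in E; discriminate.
Qed.

Lemma allp_length k B : In B (allp k) -> length B = k.
Proof.
  revert B; induction k; simpl; intros B H.
  - destruct H as [<- | []]; reflexivity.
  - apply in_app_or in H; destruct H as [H | H]; apply in_map_iff in H;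
      destruct H as [C [<- HC]]; simpl; rewrite IHk; auto.
Qed.

Lemma in_allp k B : length B = k -> In B (allp k).
Proof.
  revert B; induction k; simpl; intros B H.
  - destruct B; [left; auto | simpl in H; lia].
  - destruct B as [|b B]; simpl in H; [lia |]. apply in_or_app.
    destruct b; [left | right]; apply in_map; apply IHk; lia.
Qed.

Lemma allp_nodup k : NoDup (allp k).
Proof.
  induction k; simpl.
  - constructor; [simpl; auto | constructor].
  - apply NoDup_app.
    + apply NoDup_map_NoDup_ForallPairs; auto. intros a b _ _ H; inversion H; auto.
    + apply NoDup_map_NoDup_ForallPairs; auto. intros a b _ _ H; inversion H; auto.
    + intros B H1 H2. apply in_map_iff in H1, H2.
      destruct H1 as [? [<- _]], H2 as [? [H _]]. discriminate.
Qed.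

Lemma rsum_delta (l : list profile) (f : profile -> R) A : NoDup l -> In A l ->
  rsum (fun B => if prof_eqb B A then f B else 0) l = f A.
Proof.
  induction l; simpl; intros Hn Hi; [contradiction |]. inversion Hn; subst.
  destruct Hi as [<- | Hi].
  - rewrite prof_eqb_refl, (rsum_ext _ (fun _ => 0)), rsum_zero; [lra |].
    intros B HB. rewrite prof_eqb_neq; auto. intros ->; contradiction.
  - rewrite prof_eqb_neq by (intros ->; contradiction). rewrite IHl; auto; lra.
Qed.

Lemma prof_ext k A B : In A (allp k) -> In B (allp k) ->
  (forall j, (j < k)%nat -> holds A j = holds B j) -> A = B.
Proof.
  intros HA HB H. apply allp_length in HA, HB.
  apply nth_ext with false false; [congruence |]. intros n Hn. apply H. lia.
Qed.

Lemma is_full_holds B : is_full B = true <-> (forall j, (j < length B)%nat -> holds B j = true).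
Proof.
  unfold is_full, holds. rewrite forallb_forall. split.
  - intros H j Hj. apply H, nth_In; auto.
  - intros H b Hb. destruct (In_nth _ _ false Hb) as [j [Hj <-]]. auto.
Qed.

Lemma full_holds k B j : In B (allp k) -> is_full B = true -> (j < k)%nat -> holds B j = true.
Proof. intros HB Hf Hj. apply is_full_holds; auto. rewrite (allp_length k B HB); auto. Qed.

Lemma notfull_lacks k B : In B (allp k) -> is_full B = false ->
  exists j, (j < k)%nat /\ holds B j = false.
Proof.
  intros HB F. destruct (classic (exists j, (j < k)%nat /\ holds B j = false)) as [H | H]; auto.
  exfalso. assert (is_full B = true); [| congruence]. apply is_full_holds.
  rewrite (allp_length k B HB). intros j Hj.
  destruct (holds B j) eqn:E; auto. exfalso; apply H; eauto.
Qed.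

Lemma holds_empty k j : holds (empty_prof k) j = false.
Proof. unfold holds, empty_prof. revert j; induction k; intros [|j]; simpl; auto. Qed.

Lemma empty_in k : In (empty_prof k) (allp k).
Proof. apply in_allp. apply repeat_length. Qed.

Lemma empty_not_full k : (1 <= k)%nat -> is_full (empty_prof k) = false.
Proof.
  intros Hk. destruct (is_full (empty_prof k)) eqn:E; auto.
  assert (H := full_holds k _ 0 (empty_in k) E ltac:(lia)). rewrite holds_empty in H.
  discriminate.
Qed.

Definition full_prof (k : nat) : profile := repeat true k.

Lemma full_prof_in k : In (full_prof k) (allp k).
Proof. apply in_allp, repeat_length. Qed.

Lemma holds_full_prof k j : (j < k)%nat -> holds (full_prof k) j = true.
Proof.
  unfold holds, full_prof. revert j; induction k; intros [|j] Hj; simpl; auto; try lia.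
  apply IHk; lia.
Qed.

Lemma full_iff k B : In B (allp k) -> is_full B = prof_eqb B (full_prof k).
Proof.
  intros HB. destruct (prof_eqb B (full_prof k)) eqn:E.
  - apply prof_eqb_spec in E; subst. apply is_full_holds.
    unfold full_prof; rewrite repeat_length. apply holds_full_prof.
  - destruct (is_full B) eqn:F; auto.
    assert (B = full_prof k) as ->; [| rewrite prof_eqb_refl in E; discriminate].
    apply (prof_ext k); auto using full_prof_in. intros j Hj.
    rewrite holds_full_prof by auto. apply (full_holds k); auto.
Qed.

Lemma nchunks_R k B : In B (allp k) -> INR (nchunks B) = rsum (fun l => ind (holds B l)) (seq 0 k).
Proof.
  intros HB. rewrite <- (allp_length k B HB). clear HB.
  induction B as [|b B IH]; [reflexivity |].
  transitivity (ind b + rsum (fun l => ind (holds B l)) (seq 0 (length B))).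
  - rewrite <- IH. unfold nchunks. simpl filter.
    destruct b; [cbn [length]; rewrite S_INR |]; simpl ind; lra.
  - unfold holds. simpl. rewrite <- seq_shift, rsum_map. reflexivity.
Qed.

Lemma nchunks_empty k : nchunks (empty_prof k) = 0%nat.
Proof. unfold nchunks, empty_prof. induction k; simpl; auto. Qed.

Lemma nchunks_zero k B : In B (allp k) -> nchunks B = 0%nat -> B = empty_prof k.
Proof.
  intros HB H0. apply (prof_ext k); auto using empty_in. intros j Hj. rewrite holds_empty.
  destruct (holds B j) eqn:E; auto. exfalso.
  assert (1 <= INR (nchunks B)).
  { rewrite (nchunks_R k B HB). replace 1 with (ind (holds B j)) by (rewrite E; reflexivity).
    apply (rsum_ge_term (fun l => ind (holds B l))); [intros; apply ind_0_1 | apply in_seq; lia]. }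
  rewrite H0 in H; simpl in H; lra.
Qed.

Lemma two_missing k B j1 j2 : In B (allp k) -> (j1 < k)%nat -> (j2 < k)%nat -> j1 <> j2 ->
  holds B j1 = false -> holds B j2 = false -> (nchunks B <= k - 2)%nat.
Proof.
  intros HB H1 H2 H12 F1 F2.
  set (g := fun l => if Nat.eqb l j1 then 1 else if Nat.eqb l j2 then 1 else 0).
  assert (Hle : rsum (fun l => ind (holds B l) + g l) (seq 0 k) <= rsum (fun _ => 1) (seq 0 k)).
  { apply rsum_le. intros l _. unfold g.
    destruct (holds B l) eqn:Hl, (Nat.eqb_spec l j1), (Nat.eqb_spec l j2); subst;
      simpl; try congruence; lra. }
  rewrite rsum_plus, rsum_const, length_seq, <- (nchunks_R k B HB) in Hle.
  assert (Hg : rsum g (seq 0 k) = 2).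
  { unfold g. rewrite (rsum_ext _ (fun l => (if Nat.eqb l j1 then 1 else 0) +
                                             (if Nat.eqb l j2 then 1 else 0))).
    - rewrite rsum_plus, (rsum_delta_nat (fun _ => 1) j1 k H1),
        (rsum_delta_nat (fun _ => 1) j2 k H2). lra.
    - intros l _. destruct (Nat.eqb_spec l j1), (Nat.eqb_spec l j2); subst;
        try (exfalso; lia); lra. }
  rewrite Hg in Hle. rewrite <- (Nat.sub_add 2 k) in Hle by lia.
  rewrite plus_INR in Hle. simpl INR in Hle. apply INR_le. lra.
Qed.

Definition lack1 (k j : nat) : profile := map (fun l => negb (Nat.eqb l j)) (seq 0 k).

Lemma lack1_in k j : In (lack1 k j) (allp k).
Proof. apply in_allp. unfold lack1. rewrite length_map, length_seq; auto. Qed.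

Lemma holds_lack1 k j l : (l < k)%nat -> holds (lack1 k j) l = negb (Nat.eqb l j).
Proof.
  intros Hl. unfold holds, lack1.
  rewrite (nth_indep _ _ ((fun l => negb (Nat.eqb l j)) 0%nat))
    by (rewrite length_map, length_seq; auto).
  rewrite (map_nth (fun l => negb (Nat.eqb l j))), seq_nth by auto. reflexivity.
Qed.

Lemma lack1_char k B j : In B (allp k) -> (j < k)%nat -> holds B j = false ->
  ~ (nchunks B <= k - 2)%nat -> B = lack1 k j.
Proof.
  intros HB Hj F Hn. apply (prof_ext k); auto using lack1_in. intros l Hl.
  rewrite holds_lack1 by auto. destruct (Nat.eqb_spec l j); [subst; auto |].
  destruct (holds B l) eqn:E; auto. exfalso. apply Hn, (two_missing k B l j); auto.
Qed.

Lemma nchunks_lack1 k j : (j < k)%nat -> nchunks (lack1 k j) = (k - 1)%nat.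
Proof.
  intros Hj. apply INR_eq. rewrite minus_INR by lia. rewrite (nchunks_R k _ (lack1_in k j)).
  rewrite (rsum_ext _ (fun l => 1 - (if Nat.eqb l j then 1 else 0))).
  - rewrite rsum_minus, rsum_const, length_seq, rsum_delta_nat by auto. simpl; lra.
  - intros l Hl. apply in_seq in Hl. rewrite holds_lack1 by lia.
    destruct (Nat.eqb l j); simpl; lra.
Qed.

Lemma lack1_not_full k i : (i < k)%nat -> is_full (lack1 k i) = false.
Proof.
  intros Hi. destruct (is_full (lack1 k i)) eqn:E; auto.
  assert (H := full_holds k _ i (lack1_in k i) E Hi).
  rewrite holds_lack1, Nat.eqb_refl in H by auto. discriminate.
Qed.

Lemma lack1_not_empty k i : (2 <= k)%nat -> (i < k)%nat ->
  prof_eqb (empty_prof k) (lack1 k i) = false.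
Proof.
  intros Hk Hi. apply prof_eqb_neq. intros E.
  set (l := if Nat.eqb i 0 then 1%nat else 0%nat).
  assert (Hl : (l < k)%nat /\ l <> i) by (unfold l; destruct (Nat.eqb_spec i 0); lia).
  assert (H := holds_lack1 k i l (proj1 Hl)). rewrite <- E, holds_empty in H.
  destruct (Nat.eqb_spec l i); [lia | discriminate].
Qed.

Lemma length_set_true A i : length (set_true A i) = length A.
Proof. revert i; induction A; intros [|i]; simpl; auto. Qed.

Lemma set_true_in k A i : In A (allp k) -> In (set_true A i) (allp k).
Proof. intros H. apply in_allp. rewrite length_set_true. apply allp_length; auto. Qed.

Lemma holds_set_true A i j : (i < length A)%nat ->
  holds (set_true A i) j = holds A j || Nat.eqb j i.
Proof.
  unfold holds. revert i j; induction A as [|b A IH]; intros i j Hi; simpl in Hi; [lia |].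
  destruct i as [|i]; destruct j as [|j]; simpl; try (destruct b; reflexivity);
    try (rewrite orb_false_r; reflexivity); try (apply IH; lia); auto.
Qed.

Lemma set_true_full_lack1 k A i : In A (allp k) -> (i < k)%nat -> holds A i = false ->
  is_full (set_true A i) = true -> A = lack1 k i.
Proof.
  intros HA Hi F Hf. apply (prof_ext k); auto using lack1_in. intros l Hl.
  rewrite holds_lack1 by auto. rewrite is_full_holds in Hf.
  assert (Hlen : length A = k) by (apply allp_length; auto).
  specialize (Hf l). rewrite length_set_true, holds_set_true in Hf by lia.
  destruct (Nat.eqb_spec l i); [subst; auto |]. rewrite orb_false_r in Hf. apply Hf; lia.
Qed.

Lemma div_nonneg a b : 0 <= a -> 0 < b -> 0 <= a / b.
Proof. intros. unfold Rdiv. apply Rmult_le_pos; auto. left; apply Rinv_0_lt_compat; auto. Qed.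

Lemma div_le_l a b n : 0 < n -> a <= b * n -> a / n <= b.
Proof. intros Hn H. apply Rmult_le_reg_r with n; auto. unfold Rdiv. rewrite Rmult_assoc, Rinv_l by lra. lra. Qed.

Lemma div_exp_S n a : n / exp (a + 1) = n / exp a / exp 1.
Proof. rewrite exp_plus. field. split; apply Rgt_not_eq, exp_pos. Qed.

Lemma div_exp_P n a : n / exp (a - 1) = n / exp a * exp 1.
Proof. unfold Rminus. rewrite exp_plus, exp_Ropp. field. split; apply Rgt_not_eq, exp_pos. Qed.

Lemma exp_ge1 a : 0 <= a -> 1 <= exp a.
Proof. intros. assert (H0 := exp_ineq1_le a). lra. Qed.

Lemma inv_exp_le1 a : 0 <= a -> / exp a <= 1.
Proof. intros. rewrite <- Rinv_1. apply Rinv_le_contravar; [lra |]. apply exp_ge1; auto. Qed.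

(* 2.56 <= e <= 3, via e = exp(1/8)^8 >= (9/8)^8. *)
Lemma exp1_ge : 2.56 <= exp 1.
Proof.
  assert (E : exp 1 = exp (1/8) ^ 8).
  { replace 1 with (1/8 + 1/8 + 1/8 + 1/8 + 1/8 + 1/8 + 1/8 + 1/8) at 1 by field.
    rewrite !exp_plus. simpl. ring. }
  rewrite E. assert (H := exp_ineq1_le (1/8)).
  apply Rle_trans with ((1 + 1/8) ^ 8); [simpl; lra | apply pow_incr; lra].
Qed.

Lemma exp1_le3 : exp 1 <= 3.
Proof. apply exp_le_3. Qed.

Lemma inv_e_bounds : 0 < / exp 1 < 1.
Proof.
  assert (H := exp1_ge). split; [apply Rinv_0_lt_compat; lra |].
  assert (H1 : / exp 1 < / 1) by (apply Rinv_lt_contravar; lra). rewrite Rinv_1 in H1. exact H1.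
Qed.

(* s^3 <= 27 e^s, from e^{s/3} >= s/3. *)
Lemma cube_le_exp s : 0 <= s -> s ^ 3 <= 27 * exp s.
Proof.
  intros Hs. replace s with (s/3 + s/3 + s/3) at 2 by field. rewrite !exp_plus.
  assert (H := exp_ineq1_le (s/3)).
  replace (s ^ 3) with (27 * ((s/3) * (s/3) * (s/3))) by field.
  apply Rmult_le_compat_l; [lra |]. apply Rmult_le_compat; nra.
Qed.

Definition peers (x : state) (B : profile) : R := INR (npeers x B).
Definition Sr (k : nat) (x : state) : R := INR (Stot k x).
Definition S0r (k : nat) (x : state) : R := INR (S0 k x).

Definition Lterm (k : nat) (x : state) (j : nat) : R := Sr k x / exp (INR (Schunk k x j)).
Definition Lterm0 (k : nat) (x : state) : R := Sr k x / exp (S0r k x).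

Lemma peers_nonneg x B : 0 <= peers x B.
Proof. apply pos_INR. Qed.

Lemma S0r_nonneg k x : 0 <= S0r k x.
Proof. apply pos_INR. Qed.

Lemma Sr_sum k x : Sr k x = rsum (fun B => 1 * peers x B) (allp k).
Proof. unfold Sr, Stot. rewrite INR_sumn_l. apply rsum_ext; intros; unfold peers; lra. Qed.

Lemma Schunk_sum k x i : INR (Schunk k x i) = rsum (fun B => ind (holds B i) * peers x B) (allp k).
Proof.
  unfold Schunk. rewrite INR_sumn_l. apply rsum_ext. intros B _.
  unfold ind, peers. destruct (holds B i); simpl; lra.
Qed.

Lemma peers_full k x : peers x (full_prof k) = 1.
Proof.
  unfold peers, npeers. rewrite (full_iff k _ (full_prof_in k)), prof_eqb_refl. reflexivity.
Qed.

Lemma peers_nonfull x A : is_full A = false -> peers x A = INR (x A).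
Proof. intros H. unfold peers, npeers. rewrite H; auto. Qed.

Lemma peers_empty k x : (1 <= k)%nat -> peers x (empty_prof k) = S0r k x.
Proof. intros Hk. apply peers_nonfull, empty_not_full; auto. Qed.

(* The seed guarantees S >= 1 and S_j >= 1. *)
Lemma Sr_ge1 k x : 1 <= Sr k x.
Proof.
  rewrite Sr_sum. apply Rle_trans with (1 * peers x (full_prof k)); [rewrite peers_full; lra |].
  apply (rsum_ge_term (fun B => 1 * peers x B)); auto using full_prof_in.
  intros; rewrite Rmult_1_l; apply peers_nonneg.
Qed.

Lemma Sr_pos k x : 0 < Sr k x.
Proof. assert (H := Sr_ge1 k x). lra. Qed.

Lemma Schunk_ge1 k x j : (j < k)%nat -> 1 <= INR (Schunk k x j).
Proof.
  intros Hj. rewrite Schunk_sum.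
  apply Rle_trans with (ind (holds (full_prof k) j) * peers x (full_prof k)).
  - rewrite holds_full_prof, peers_full by auto. simpl; lra.
  - apply (rsum_ge_term (fun B => ind (holds B j) * peers x B)); auto using full_prof_in.
    intros. apply Rmult_le_pos; [apply ind_0_1 | apply peers_nonneg].
Qed.

Lemma Lterm_nonneg k x j : 0 <= Lterm k x j.
Proof. apply div_nonneg; [apply pos_INR | apply exp_pos]. Qed.

Lemma Lterm0_nonneg k x : 0 <= Lterm0 k x.
Proof. apply div_nonneg; [apply pos_INR | apply exp_pos]. Qed.

Lemma peers_add x A B : is_full A = false ->
  peers (add_peer x A) B = peers x B + ind (prof_eqb B A).
Proof.
  intros Hf. unfold peers, npeers, add_peer, ind. destruct (prof_eqb B A) eqn:E.
  - apply prof_eqb_spec in E; subst. rewrite Hf, plus_INR. simpl; lra.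
  - destruct (is_full B); lra.
Qed.

Lemma peers_rem x A B : is_full A = false -> (1 <= x A)%nat ->
  peers (rem_peer x A) B = peers x B - ind (prof_eqb B A).
Proof.
  intros Hf H1. unfold peers, npeers, rem_peer, ind. destruct (prof_eqb B A) eqn:E.
  - apply prof_eqb_spec in E; subst. rewrite Hf, minus_INR by lia. simpl; lra.
  - destruct (is_full B); lra.
Qed.

Lemma wsum_add k x A (c : profile -> R) : In A (allp k) -> is_full A = false ->
  rsum (fun B => c B * peers (add_peer x A) B) (allp k)
  = rsum (fun B => c B * peers x B) (allp k) + c A.
Proof.
  intros HA Hf.
  rewrite (rsum_ext _ (fun B => c B * peers x B + (if prof_eqb B A then c B else 0))).
  - rewrite rsum_plus, rsum_delta; auto using allp_nodup.
  - intros B _. rewrite peers_add by auto. unfold ind. destruct (prof_eqb B A); lra.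
Qed.

Lemma wsum_rem k x A (c : profile -> R) : In A (allp k) -> is_full A = false -> (1 <= x A)%nat ->
  rsum (fun B => c B * peers (rem_peer x A) B) (allp k)
  = rsum (fun B => c B * peers x B) (allp k) - c A.
Proof.
  intros HA Hf H1.
  rewrite (rsum_ext _ (fun B => c B * peers x B - (if prof_eqb B A then c B else 0))).
  - rewrite rsum_minus, rsum_delta; auto using allp_nodup.
  - intros B _. rewrite peers_rem by auto. unfold ind. destruct (prof_eqb B A); lra.
Qed.

Lemma Stot_add k x A : In A (allp k) -> is_full A = false ->
  INR (Stot k (add_peer x A)) = INR (Stot k x) + 1.
Proof. intros. change (Sr k (add_peer x A) = Sr k x + 1). rewrite !Sr_sum, wsum_add; auto. Qed.

Lemma Stot_rem k x A : In A (allp k) -> is_full A = false -> (1 <= x A)%nat ->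
  INR (Stot k (rem_peer x A)) = INR (Stot k x) - 1.
Proof. intros. change (Sr k (rem_peer x A) = Sr k x - 1). rewrite !Sr_sum, wsum_rem; auto. Qed.

Lemma Schunk_add k x A i : In A (allp k) -> is_full A = false ->
  INR (Schunk k (add_peer x A) i) = INR (Schunk k x i) + ind (holds A i).
Proof. intros. rewrite !Schunk_sum, wsum_add; auto. Qed.

Lemma Schunk_rem k x A i : In A (allp k) -> is_full A = false -> (1 <= x A)%nat ->
  INR (Schunk k (rem_peer x A) i) = INR (Schunk k x i) - ind (holds A i).
Proof. intros. rewrite !Schunk_sum, wsum_rem; auto. Qed.

Lemma S0_add k x A :
  INR (S0 k (add_peer x A)) = INR (S0 k x) + ind (prof_eqb (empty_prof k) A).
Proof. unfold S0, add_peer, ind. destruct (prof_eqb _ _); [rewrite plus_INR; simpl |]; lra. Qed.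

Lemma S0_rem k x A : (1 <= x A)%nat ->
  INR (S0 k (rem_peer x A)) = INR (S0 k x) - ind (prof_eqb (empty_prof k) A).
Proof.
  intros H. unfold S0, rem_peer, ind. destruct (prof_eqb _ _) eqn:E; [| lra].
  apply prof_eqb_spec in E. rewrite E, minus_INR by lia. simpl; lra.
Qed.

Definition Lform (k : nat) (n : R) (s : nat -> R) (sg : R) : R :=
  Cconst k * rsum (fun i => n - s i) (seq 0 k) + rsum (fun i => n / exp (s i)) (seq 0 k)
  + n / exp sg.

Lemma Lyap_Lform k x :
  Lyap k x = Lform k (INR (Stot k x)) (fun i => INR (Schunk k x i)) (INR (S0 k x)).
Proof. reflexivity. Qed.

Lemma Cconst_nonneg k : 0 <= Cconst k.
Proof.
  unfold Cconst. assert (0 <= INR k ^ 3) by (apply pow_le, pos_INR).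
  assert (He := exp_pos 1). nra.
Qed.

(* One more peer holding nothing: each S - S_j grows by 1, each e^{-S_j} term by
   at most 1, and the S_0 term shrinks by a factor close to 1/e. *)
Lemma Lform_arrival k n s sg : 0 <= n -> 0 <= sg -> (forall i, 0 <= s i) ->
  Lform k (n + 1) s (sg + 1) - Lform k n s sg
  <= Cconst k * INR k + INR k + 1 - (1 - / exp 1) * (n / exp sg).
Proof.
  intros Hn Hsg Hs. unfold Lform.
  rewrite (rsum_ext (fun i => n + 1 - s i) (fun i => (n - s i) + 1)) by (intros; ring).
  rewrite (rsum_ext (fun i => (n + 1) / exp (s i)) (fun i => n / exp (s i) + / exp (s i)))
    by (intros; field; apply Rgt_not_eq, exp_pos).
  rewrite !rsum_plus, rsum_const, length_seq.
  assert (rsum (fun i => / exp (s i)) (seq 0 k) <= INR k).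
  { replace (INR k) with (INR (length (seq 0 k)) * 1) by (rewrite length_seq; lra).
    rewrite <- rsum_const. apply rsum_le. intros i _. apply inv_exp_le1; auto. }
  rewrite div_exp_S.
  assert (He := inv_e_bounds). assert (Hie := inv_exp_le1 sg Hsg).
  assert (Hi0 : 0 < / exp sg) by apply Rinv_0_lt_compat, exp_pos.
  unfold Rdiv. nra.
Qed.

(* A peer gains chunk i without completing: S - S_i drops by 1 and the
   e^{-S_i} term by the factor 1/e; S_0 drops by 1 iff the peer was empty. *)
Lemma Lform_gain k n s sg sg' i : (i < k)%nat ->
  Lform k n (fun j => s j + (if Nat.eqb j i then 1 else 0)) sg' - Lform k n s sg
  = - Cconst k - (1 - / exp 1) * (n / exp (s i)) + (n / exp sg' - n / exp sg).
Proof.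
  intros Hi. unfold Lform.
  rewrite (rsum_ext (fun j => n - (s j + _)) (fun j => (n - s j) - (if Nat.eqb j i then 1 else 0)))
    by (intros; ring).
  rewrite (rsum_ext (fun j => n / exp (s j + _)) (fun j => n / exp (s j) -
      (if Nat.eqb j i then (1 - / exp 1) * (n / exp (s j)) else 0))).
  2:{ intros j _. destruct (Nat.eqb j i); [rewrite div_exp_S; field; split; apply Rgt_not_eq, exp_pos |].
      rewrite Rplus_0_r; ring. }
  rewrite !rsum_minus, (rsum_delta_nat (fun _ => 1)),
    (rsum_delta_nat (fun j => (1 - / exp 1) * (n / exp (s j)))) by auto.
  ring.
Qed.

(* A peer lacking only chunk i completes and leaves: S and the S_j with j held
   drop by 1, so S - S_i drops by 1 and each e^{-S_j} term of a held chunk is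
   multiplied by at most e. *)
Lemma Lform_complete k n s sg (h : nat -> R) i : (i < k)%nat -> h i = 0 ->
  (forall j, h j = 0 \/ h j = 1) -> 0 <= n ->
  Lform k (n - 1) (fun j => s j - h j) sg - Lform k n s sg
  <= - Cconst k + (exp 1 - 1) * rsum (fun j => h j * (n / exp (s j))) (seq 0 k).
Proof.
  intros Hi Hhi Hh Hn. unfold Lform.
  assert (Hcnt : rsum (fun j => (n - 1 - (s j - h j)) - (n - s j)) (seq 0 k) <= -1).
  { rewrite (rsum_ext _ (fun j => - (1 - h j))) by (intros; ring).
    assert (1 - h i <= rsum (fun j => 1 - h j) (seq 0 k)).
    { apply (rsum_ge_term (fun j => 1 - h j)); [| apply in_seq; lia].
      intros j _; destruct (Hh j); lra. }
    rewrite (rsum_ext _ (fun j => -1 * (1 - h j))), rsum_scal by (intros; ring). lra. }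
  assert (Hexp : rsum (fun j => (n - 1) / exp (s j - h j) - n / exp (s j)) (seq 0 k)
                 <= rsum (fun j => (exp 1 - 1) * (h j * (n / exp (s j)))) (seq 0 k)).
  { apply rsum_le. intros j _. assert (He := exp1_ge).
    assert (Hp : 0 < / exp (s j)) by apply Rinv_0_lt_compat, exp_pos.
    destruct (Hh j) as [-> | ->].
    - rewrite Rminus_0_r. unfold Rdiv. nra.
    - rewrite div_exp_P. unfold Rdiv. nra. }
  rewrite rsum_scal in Hexp. rewrite !rsum_minus in Hcnt, Hexp.
  assert (H0 : (n - 1) / exp sg - n / exp sg <= 0).
  { unfold Rdiv. assert (0 < / exp sg) by apply Rinv_0_lt_compat, exp_pos. nra. }
  assert (HC := Cconst_nonneg k). nra.
Qed.

Lemma Lform_ext k n s s' sg : (forall i, s i = s' i) -> Lform k n s sg = Lform k n s' sg.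
Proof.
  intros H. unfold Lform.
  rewrite (rsum_ext (fun i => n - s i) (fun i => n - s' i)),
    (rsum_ext (fun i => n / exp (s i)) (fun i => n / exp (s' i))) by (intros; rewrite H; auto).
  reflexivity.
Qed.

Lemma arrival_increment k x : (1 <= k)%nat ->
  Lyap k (add_peer x (empty_prof k)) - Lyap k x
  <= Cconst k * INR k + INR k + 1 - (1 - / exp 1) * Lterm0 k x.
Proof.
  intros Hk. rewrite !Lyap_Lform, Stot_add, S0_add, prof_eqb_refl
    by auto using empty_in, empty_not_full.
  rewrite (Lform_ext k _ _ (fun i => INR (Schunk k x i))).
  - apply Lform_arrival; intros; apply pos_INR.
  - intros i. rewrite Schunk_add, holds_empty by auto using empty_in, empty_not_full.
    simpl; ring.
Qed.

Lemma download_increment k x A i : In A (allp k) -> is_full A = false -> (i < k)%nat ->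
  holds A i = false -> (1 <= x A)%nat -> is_full (set_true A i) = false ->
  Lyap k (move x A i) - Lyap k x
  = - Cconst k - (1 - / exp 1) * Lterm k x i
    + ind (prof_eqb (empty_prof k) A) * ((exp 1 - 1) * Lterm0 k x).
Proof.
  intros HA HfA Hi HAi H1 Hf'. unfold move. rewrite Hf'.
  assert (HA' := set_true_in k A i HA).
  assert (Hlen : length A = k) by (apply allp_length; auto).
  assert (E0 : prof_eqb (empty_prof k) (set_true A i) = false).
  { apply prof_eqb_neq. intros E.
    assert (H : holds (set_true A i) i = true)
      by (rewrite holds_set_true, Nat.eqb_refl, orb_true_r; auto; lia).
    rewrite <- E, holds_empty in H; discriminate. }
  rewrite !Lyap_Lform, Stot_add, Stot_rem, S0_add, S0_rem, E0 by auto.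
  rewrite (Lform_ext k _ _ (fun j => INR (Schunk k x j) + (if Nat.eqb j i then 1 else 0))).
  2:{ intros j. rewrite Schunk_add, Schunk_rem, holds_set_true by (auto; lia).
      destruct (Nat.eqb_spec j i); [subst; rewrite HAi; simpl; lra |].
      rewrite orb_false_r. lra. }
  replace (INR (Stot k x) - 1 + 1) with (INR (Stot k x)) by ring.
  rewrite Lform_gain by auto. unfold Lterm, Lterm0, Sr, S0r.
  destruct (prof_eqb (empty_prof k) A); simpl ind.
  - replace (INR (S0 k x) - 1 + 0) with (INR (S0 k x) - 1) by ring.
    rewrite div_exp_P. ring.
  - replace (INR (S0 k x) - 0 + 0) with (INR (S0 k x)) by ring. ring.
Qed.

Lemma completion_increment k x A i : (2 <= k)%nat -> In A (allp k) -> is_full A = false ->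
  (i < k)%nat -> holds A i = false -> (1 <= x A)%nat -> is_full (set_true A i) = true ->
  Lyap k (move x A i) - Lyap k x
  <= - Cconst k + (exp 1 - 1) * rsum (fun j => ind (holds A j) * Lterm k x j) (seq 0 k).
Proof.
  intros Hk HA HfA Hi HAi H1 Hf'. unfold move. rewrite Hf'.
  assert (EA : A = lack1 k i) by (apply (set_true_full_lack1 k A i); auto).
  assert (E0 : prof_eqb (empty_prof k) A = false) by (rewrite EA; apply lack1_not_empty; auto).
  rewrite !Lyap_Lform, Stot_rem, S0_rem, E0 by auto. simpl ind. rewrite Rminus_0_r.
  rewrite (Lform_ext k _ _ (fun j => INR (Schunk k x j) - ind (holds A j)))
    by (intros; apply Schunk_rem; auto).
  apply (Lform_complete k _ _ _ _ i); auto using pos_INR.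
  - rewrite HAi; reflexivity.
  - intros j; destruct (holds A j); simpl; auto.
Qed.

Lemma w_nonneg k x B : 0 <= w k x B.
Proof. apply div_nonneg; [apply pos_INR | apply Sr_pos]. Qed.

Lemma w3_nonneg k x B1 B2 B3 : 0 <= w k x B1 * w k x B2 * w k x B3.
Proof.
  assert (H1 := w_nonneg k x B1). assert (H2 := w_nonneg k x B2).
  assert (H3 := w_nonneg k x B3). apply Rmult_le_pos; [apply Rmult_le_pos |]; auto.
Qed.

Lemma sum3_le k f g : (forall B1 B2 B3, f B1 B2 B3 <= g B1 B2 B3) -> sum3 k f <= sum3 k g.
Proof. intros H. unfold sum3. repeat (apply rsum_le; intros). auto. Qed.

Lemma sum3_nonneg k f : (forall B1 B2 B3, 0 <= f B1 B2 B3) -> 0 <= sum3 k f.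
Proof. intros H. unfold sum3. repeat (apply rsum_nonneg; intros). auto. Qed.

Lemma p_empty_nonneg k x i : 0 <= p_empty k x i.
Proof.
  apply sum3_nonneg. intros. apply Rmult_le_pos; [apply w3_nonneg |].
  destruct (rare3 _ _ _ _); [apply inv_INR_nonneg | lra].
Qed.

Lemma p_mid_nonneg k x A i : 0 <= p_mid k x A i.
Proof.
  apply rsum_nonneg. intros. apply Rmult_le_pos; [apply w_nonneg |].
  destruct (_ && _); [apply inv_INR_nonneg | lra].
Qed.

Lemma p_last_nonneg k x A i : 0 <= p_last k x A i.
Proof. apply sum3_nonneg. intros. apply Rmult_le_pos; [apply w3_nonneg | destruct (_ && _); lra]. Qed.

Lemma p_dl_nonneg k x A i : 0 <= p_dl k x A i.
Proof.
  unfold p_dl. destruct (Nat.eqb _ _); [apply p_empty_nonneg |].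
  destruct (Nat.leb _ _); [apply p_mid_nonneg | apply p_last_nonneg].
Qed.

Definition sum_events (k : nat) (g : profile -> nat -> R) : R :=
  rsum (fun A => if is_full A then 0 else
         rsum (fun i => if holds A i then 0 else g A i) (seq 0 k)) (allp k).

Definition is_event (k : nat) (A : profile) (i : nat) : Prop :=
  In A (allp k) /\ is_full A = false /\ (i < k)%nat /\ holds A i = false.

Lemma sum_events_le k g1 g2 : (forall A i, is_event k A i -> g1 A i <= g2 A i) ->
  sum_events k g1 <= sum_events k g2.
Proof.
  intros H. apply rsum_le. intros A HA. destruct (is_full A) eqn:E; [lra |].
  apply rsum_le. intros i Hi. apply in_seq in Hi.
  destruct (holds A i) eqn:E2; [lra | apply H; repeat split; auto; lia].
Qed.

Lemma sum_events_ext k g1 g2 : (forall A i, is_event k A i -> g1 A i = g2 A i) ->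
  sum_events k g1 = sum_events k g2.
Proof.
  intros H. apply Rle_antisym; apply sum_events_le; intros; rewrite H; auto; lra.
Qed.

Lemma sum_events_nonneg k g : (forall A i, is_event k A i -> 0 <= g A i) -> 0 <= sum_events k g.
Proof.
  intros H. apply rsum_nonneg. intros A HA. destruct (is_full A) eqn:E; [lra |].
  apply rsum_nonneg. intros i Hi. apply in_seq in Hi.
  destruct (holds A i) eqn:E2; [lra | apply H; repeat split; auto; lia].
Qed.

Lemma sum_events_plus k g1 g2 :
  sum_events k (fun A i => g1 A i + g2 A i) = sum_events k g1 + sum_events k g2.
Proof.
  unfold sum_events. rewrite <- rsum_plus. apply rsum_ext. intros A _.
  destruct (is_full A); [lra |]. rewrite <- rsum_plus. apply rsum_ext. intros i _.
  destruct (holds A i); lra.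
Qed.

Lemma sum_events_scal k c g : sum_events k (fun A i => c * g A i) = c * sum_events k g.
Proof.
  unfold sum_events. rewrite <- rsum_scal. apply rsum_ext. intros A _.
  destruct (is_full A); [lra |]. rewrite <- rsum_scal. apply rsum_ext. intros i _.
  destruct (holds A i); lra.
Qed.

Lemma sum_events_empty k g : (1 <= k)%nat ->
  sum_events k (fun A i => ind (prof_eqb (empty_prof k) A) * g A i)
  = rsum (fun i => g (empty_prof k) i) (seq 0 k).
Proof.
  intros Hk. unfold sum_events.
  rewrite (rsum_ext _ (fun A => if prof_eqb A (empty_prof k) then
     rsum (fun i => g A i) (seq 0 k) else 0)).
  - rewrite rsum_delta; auto using allp_nodup, empty_in.
  - intros A HA. rewrite (prof_eqb_sym (empty_prof k) A).
    destruct (prof_eqb A (empty_prof k)) eqn:E.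
    + apply prof_eqb_spec in E; subst. rewrite empty_not_full by auto. apply rsum_ext.
      intros i _. rewrite holds_empty. simpl; ring.
    + destruct (is_full A); auto. rewrite (rsum_ext _ (fun _ => 0)); [apply rsum_zero |].
      intros i _. destruct (holds A i); simpl; ring.
Qed.

Definition rate (k : nat) (x : state) (A : profile) (i : nat) : R := INR (x A) * p_dl k x A i.

Lemma rate_nonneg k x A i : 0 <= rate k x A i.
Proof. apply Rmult_le_pos; [apply pos_INR | apply p_dl_nonneg]. Qed.

Definition jump_bound (k : nat) (x : state) (A : profile) (i : nat) : R :=
  - Cconst k
  + ind (prof_eqb (empty_prof k) A) * ((exp 1 - 1) * Lterm0 k x - (1 - / exp 1) * Lterm k x i)
  + ind (is_full (set_true A i)) *
      ((exp 1 - 1) * rsum (fun j => ind (holds A j) * Lterm k x j) (seq 0 k)).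

Lemma jump_le_bound k x A i : (2 <= k)%nat -> is_event k A i -> (1 <= x A)%nat ->
  Lyap k (move x A i) - Lyap k x <= jump_bound k x A i.
Proof.
  intros Hk [HA [HfA [Hi HAi]]] H1. unfold jump_bound.
  destruct (is_full (set_true A i)) eqn:Ef.
  - assert (EA : A = lack1 k i) by (apply (set_true_full_lack1 k A i); auto).
    assert (E0 : prof_eqb (empty_prof k) A = false) by (rewrite EA; apply lack1_not_empty; auto).
    rewrite E0. simpl ind. assert (H := completion_increment k x A i Hk HA HfA Hi HAi H1 Ef).
    lra.
  - rewrite download_increment by auto. simpl ind.
    assert (He := inv_e_bounds). assert (Ha := Lterm_nonneg k x i).
    destruct (prof_eqb (empty_prof k) A); simpl ind; nra.
Qed.

Lemma drift_le k lam x : (2 <= k)%nat -> 0 <= lam ->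
  drift k lam (Lyap k) x
  <= lam * (Cconst k * INR k + INR k + 1 - (1 - / exp 1) * Lterm0 k x)
     + sum_events k (fun A i => rate k x A i * jump_bound k x A i).
Proof.
  intros Hk Hl. unfold drift. apply Rplus_le_compat.
  - apply Rmult_le_compat_l; auto. apply arrival_increment; lia.
  - apply sum_events_le. intros A i Hev. unfold rate.
    destruct (Nat.eq_dec (x A) 0) as [Ex | Ex]; [rewrite Ex; simpl; lra |].
    apply Rmult_le_compat_l; [apply Rmult_le_pos; [apply pos_INR | apply p_dl_nonneg] |].
    apply jump_le_bound; auto; lia.
Qed.

(* Aggregated quantities appearing in the drift:
   p_start   = probability that a tick of an empty peer yields a chunk,
   rate_tot  = total download rate, rate_nonempty = that of non-empty peers,
   gain_empty = S_0 sum_i p_i S e^{-S_i} (gain of the e^{-S_i} terms from empty peers),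
   cost_complete = penalty of completions on the e^{-S_j} terms. *)
Definition p_start (k : nat) (x : state) : R := rsum (fun i => p_empty k x i) (seq 0 k).
Definition rate_tot (k : nat) (x : state) : R := sum_events k (rate k x).
Definition rate_nonempty (k : nat) (x : state) : R :=
  sum_events k (fun A i => (1 - ind (prof_eqb (empty_prof k) A)) * rate k x A i).
Definition gain_empty (k : nat) (x : state) : R :=
  S0r k x * rsum (fun i => p_empty k x i * Lterm k x i) (seq 0 k).
Definition cost_complete (k : nat) (x : state) : R :=
  sum_events k (fun A i => rate k x A i * ind (is_full (set_true A i)) *
    rsum (fun j => ind (holds A j) * Lterm k x j) (seq 0 k)).

Lemma p_start_nonneg k x : 0 <= p_start k x.
Proof. apply rsum_nonneg. intros; apply p_empty_nonneg. Qed.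

Lemma rate_nonempty_nonneg k x : 0 <= rate_nonempty k x.
Proof.
  apply sum_events_nonneg. intros. apply Rmult_le_pos; [| apply rate_nonneg].
  destruct (prof_eqb _ _); simpl; lra.
Qed.

Lemma gain_empty_nonneg k x : 0 <= gain_empty k x.
Proof.
  apply Rmult_le_pos; [apply S0r_nonneg |]. apply rsum_nonneg. intros.
  apply Rmult_le_pos; [apply p_empty_nonneg | apply Lterm_nonneg].
Qed.

Lemma cost_complete_nonneg k x : 0 <= cost_complete k x.
Proof.
  apply sum_events_nonneg. intros.
  apply Rmult_le_pos; [apply Rmult_le_pos; [apply rate_nonneg | apply ind_0_1] |].
  apply rsum_nonneg. intros. apply Rmult_le_pos; [apply ind_0_1 | apply Lterm_nonneg].
Qed.

Lemma rate_empty k x i : rate k x (empty_prof k) i = S0r k x * p_empty k x i.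
Proof. unfold rate, p_dl. rewrite nchunks_empty. reflexivity. Qed.

Lemma rate_tot_split k x : (1 <= k)%nat -> rate_tot k x = S0r k x * p_start k x + rate_nonempty k x.
Proof.
  intros Hk. unfold rate_tot, rate_nonempty.
  rewrite (sum_events_ext _ (rate k x) (fun A i => ind (prof_eqb (empty_prof k) A) * rate k x A i +
     (1 - ind (prof_eqb (empty_prof k) A)) * rate k x A i)) by (intros; ring).
  rewrite sum_events_plus, sum_events_empty by auto. unfold p_start. rewrite <- rsum_scal. f_equal.
  apply rsum_ext. intros. apply rate_empty.
Qed.

Lemma rate_tot_nonneg k x : (1 <= k)%nat -> 0 <= rate_tot k x.
Proof.
  intros Hk. rewrite rate_tot_split by auto.
  assert (H := Rmult_le_pos _ _ (S0r_nonneg k x) (p_start_nonneg k x)).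
  assert (H' := rate_nonempty_nonneg k x). lra.
Qed.

Lemma sum_events_jump k x : (1 <= k)%nat ->
  sum_events k (fun A i => rate k x A i * jump_bound k x A i)
  = - Cconst k * rate_tot k x + (exp 1 - 1) * Lterm0 k x * (S0r k x * p_start k x)
    - (1 - / exp 1) * gain_empty k x + (exp 1 - 1) * cost_complete k x.
Proof.
  intros Hk. unfold jump_bound.
  rewrite (sum_events_ext _ _ (fun A i => (- Cconst k) * rate k x A i +
     (ind (prof_eqb (empty_prof k) A) *
        (rate k x A i * ((exp 1 - 1) * Lterm0 k x - (1 - / exp 1) * Lterm k x i)) +
      (exp 1 - 1) * (rate k x A i * ind (is_full (set_true A i)) *
        rsum (fun j => ind (holds A j) * Lterm k x j) (seq 0 k))))) by (intros; ring).
  rewrite !sum_events_plus, !sum_events_scal, sum_events_empty by auto.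
  unfold rate_tot, cost_complete, gain_empty, p_start.
  rewrite (rsum_ext _ (fun i => ((exp 1 - 1) * Lterm0 k x * S0r k x) * p_empty k x i
     - ((1 - / exp 1) * S0r k x) * (p_empty k x i * Lterm k x i))).
  2:{ intros. rewrite rate_empty. ring. }
  rewrite rsum_minus, !rsum_scal.
  change (rsum (fun i => p_empty k x i) (seq 0 k)) with (rsum (p_empty k x) (seq 0 k)). ring.
Qed.

(* Sampling estimates. A uniform draw holds chunk j with probability
   q_j = S_j / S; the draws of a sample are independent, so expectations of
   products of per-draw indicators factorise. *)

Definition frac (k : nat) (x : state) (j : nat) : R := INR (Schunk k x j) / Sr k x.

Definition hR (B : profile) (j : nat) : R := ind (holds B j).
Definition eqR (B A : profile) : R := ind (prof_eqb B A).

Lemma frac_bounds k x j : 0 <= frac k x j <= 1.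
Proof.
  assert (Hn := Sr_pos k x). split; [apply div_nonneg; auto; apply pos_INR |].
  apply div_le_l; auto. rewrite Rmult_1_l, Schunk_sum, Sr_sum. apply rsum_le. intros B _.
  assert (H := peers_nonneg x B). destruct (holds B j); simpl; lra.
Qed.

Lemma sum_w k x f :
  rsum (fun B => w k x B * f B) (allp k) = rsum (fun B => f B * peers x B) (allp k) / Sr k x.
Proof. unfold Rdiv. rewrite <- rsum_scalr. apply rsum_ext. intros B _. unfold w, Rdiv, peers, Sr. ring. Qed.

Lemma sum_w_1 k x : rsum (fun B => w k x B * 1) (allp k) = 1.
Proof. rewrite sum_w, <- Sr_sum. field. apply Rgt_not_eq, Sr_pos. Qed.

Lemma sum_w_holds k x j : rsum (fun B => w k x B * hR B j) (allp k) = frac k x j.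
Proof. rewrite sum_w. unfold hR. rewrite <- Schunk_sum. reflexivity. Qed.

Lemma sum_w_lacks k x j : rsum (fun B => w k x B * (1 - hR B j)) (allp k) = 1 - frac k x j.
Proof.
  rewrite (rsum_ext _ (fun B => w k x B * 1 - w k x B * hR B j)) by (intros; ring).
  rewrite rsum_minus, sum_w_1, sum_w_holds. reflexivity.
Qed.

Lemma sum_w_eq k x A : In A (allp k) -> rsum (fun B => w k x B * eqR B A) (allp k) = w k x A.
Proof.
  intros HA. rewrite (rsum_ext _ (fun B => if prof_eqb B A then w k x B else 0)).
  - apply rsum_delta; auto using allp_nodup.
  - intros B _. unfold eqR. destruct (prof_eqb B A); simpl; ring.
Qed.

Lemma sum3_ext k f g : (forall B1 B2 B3, f B1 B2 B3 = g B1 B2 B3) -> sum3 k f = sum3 k g.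
Proof. intros H. unfold sum3. repeat (apply rsum_ext; intros). auto. Qed.

Lemma sum3_plus k f g :
  sum3 k (fun B1 B2 B3 => f B1 B2 B3 + g B1 B2 B3) = sum3 k f + sum3 k g.
Proof.
  unfold sum3. rewrite <- rsum_plus. apply rsum_ext; intros.
  rewrite <- rsum_plus. apply rsum_ext; intros. rewrite <- rsum_plus. reflexivity.
Qed.

Lemma sum3_scal k c f : sum3 k (fun B1 B2 B3 => c * f B1 B2 B3) = c * sum3 k f.
Proof.
  unfold sum3. rewrite <- rsum_scal. apply rsum_ext; intros.
  rewrite <- rsum_scal. apply rsum_ext; intros. rewrite <- rsum_scal. reflexivity.
Qed.

Lemma sum3_swap {T} k (F : T -> profile -> profile -> profile -> R) l :
  rsum (fun i => sum3 k (F i)) l = sum3 k (fun B1 B2 B3 => rsum (fun i => F i B1 B2 B3) l).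
Proof.
  unfold sum3. rewrite rsum_swap. apply rsum_ext; intros.
  rewrite rsum_swap. apply rsum_ext; intros. rewrite rsum_swap. reflexivity.
Qed.

Lemma sum3_product k x f1 f2 f3 :
  sum3 k (fun B1 B2 B3 => w k x B1 * w k x B2 * w k x B3 * (f1 B1 * f2 B2 * f3 B3)) =
  rsum (fun B => w k x B * f1 B) (allp k) * rsum (fun B => w k x B * f2 B) (allp k)
  * rsum (fun B => w k x B * f3 B) (allp k).
Proof.
  unfold sum3.
  set (S2 := rsum (fun B => w k x B * f2 B) (allp k)).
  set (S3 := rsum (fun B => w k x B * f3 B) (allp k)).
  transitivity (rsum (fun B1 => w k x B1 * f1 B1 * (S2 * S3)) (allp k)).
  - apply rsum_ext; intros B1 _.
    transitivity (rsum (fun B2 => w k x B1 * f1 B1 * (w k x B2 * f2 B2) * S3) (allp k)).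
    + apply rsum_ext; intros B2 _. unfold S3. rewrite <- rsum_scal. apply rsum_ext; intros; ring.
    + rewrite rsum_scalr, rsum_scal. fold S2. ring.
  - rewrite rsum_scalr. ring.
Qed.

Lemma rare_ind B1 B2 B3 i : ind (rare3 B1 B2 B3 i) =
  hR B1 i * (1 - hR B2 i) * (1 - hR B3 i) + (1 - hR B1 i) * hR B2 i * (1 - hR B3 i)
  + (1 - hR B1 i) * (1 - hR B2 i) * hR B3 i.
Proof. unfold rare3, cnt3, hR. destruct (holds B1 i), (holds B2 i), (holds B3 i); simpl; lra. Qed.

Lemma prob_rare k x i :
  sum3 k (fun B1 B2 B3 => w k x B1 * w k x B2 * w k x B3 * ind (rare3 B1 B2 B3 i))
  = 3 * frac k x i * (1 - frac k x i) ^ 2.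
Proof.
  rewrite (sum3_ext _ _ (fun B1 B2 B3 =>
     w k x B1 * w k x B2 * w k x B3 * (hR B1 i * (1 - hR B2 i) * (1 - hR B3 i)) +
     (w k x B1 * w k x B2 * w k x B3 * ((1 - hR B1 i) * hR B2 i * (1 - hR B3 i)) +
      w k x B1 * w k x B2 * w k x B3 * ((1 - hR B1 i) * (1 - hR B2 i) * hR B3 i))))
    by (intros; rewrite rare_ind; ring).
  rewrite !sum3_plus, !sum3_product, sum_w_holds, sum_w_lacks. ring.
Qed.

Lemma p_empty_up k x i : p_empty k x i <= 3 * frac k x i * (1 - frac k x i) ^ 2.
Proof.
  rewrite <- prob_rare. apply sum3_le. intros. apply Rmult_le_compat_l; [apply w3_nonneg |].
  destruct (rare3 _ _ _ _); simpl; [apply inv_INR_le1 | lra].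
Qed.

(* ... and at least P(i rare) / k, since at most k chunks are rare. *)
Lemma p_empty_lo k x j : (j < k)%nat ->
  3 * frac k x j * (1 - frac k x j) ^ 2 / INR k <= p_empty k x j.
Proof.
  intros Hj. rewrite <- prob_rare. unfold Rdiv. rewrite Rmult_comm, <- sum3_scal.
  apply sum3_le. intros B1 B2 B3. rewrite Rmult_comm, Rmult_assoc.
  apply Rmult_le_compat_l; [apply w3_nonneg |].
  destruct (rare3 B1 B2 B3 j) eqn:Er; simpl ind; [| lra]. rewrite Rmult_1_l.
  assert (Hpos : 1 <= INR (nrare k B1 B2 B3)).
  { unfold nrare. rewrite len_filter_R. replace 1 with (ind (rare3 B1 B2 B3 j)) by (rewrite Er; auto).
    apply (rsum_ge_term (fun i => ind (rare3 B1 B2 B3 i))); [intros; apply ind_0_1 | apply in_seq; lia]. }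
  apply Rinv_le_contravar; [lra |]. unfold nrare. apply le_INR.
  rewrite <- (length_seq k 0) at 2. apply filter_length_le.
Qed.

Lemma p_start_up k x : p_start k x <= rsum (fun i => 3 * frac k x i * (1 - frac k x i) ^ 2) (seq 0 k).
Proof. apply rsum_le. intros. apply p_empty_up. Qed.

(* An empty peer gets some chunk whenever some chunk is rare. *)
Lemma p_start_lo k x j : (j < k)%nat -> 3 * frac k x j * (1 - frac k x j) ^ 2 <= p_start k x.
Proof.
  intros Hj. rewrite <- prob_rare. unfold p_start, p_empty. rewrite sum3_swap.
  apply sum3_le. intros B1 B2 B3. rewrite rsum_scal.
  apply Rmult_le_compat_l; [apply w3_nonneg |]. unfold nrare. rewrite rsum_uniform_choice.
  destruct (rare3 B1 B2 B3 j) eqn:Er; simpl ind.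
  - rewrite (count_inv_eq1 _ k j); auto; lra.
  - apply Rle_trans with 0; [lra |].
    destruct (length _); [simpl; lra | rewrite Rinv_r; [lra | apply not_0_INR; lia]].
Qed.

(* Rule (ii): a peer lacking j downloads some chunk whenever its single draw holds j. *)
Lemma p_mid_lo k x A j : (j < k)%nat -> holds A j = false ->
  frac k x j <= rsum (fun i => if holds A i then 0 else p_mid k x A i) (seq 0 k).
Proof.
  intros Hj HAj.
  rewrite (rsum_ext _ (fun i => rsum (fun B => w k x B *
    (if holds B i && negb (holds A i) then / INR (nmatch k A B) else 0)) (allp k))).
  2:{ intros i _. unfold p_mid. destruct (holds A i) eqn:E; auto.
      rewrite (rsum_ext _ (fun _ => 0)); [rewrite rsum_zero; auto |].
      intros B _. rewrite andb_false_r. ring. }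
  rewrite rsum_swap, <- sum_w_holds. apply rsum_le. intros B _. rewrite rsum_scal.
  apply Rmult_le_compat_l; [apply w_nonneg |]. unfold nmatch.
  rewrite (rsum_uniform_choice (fun i => holds B i && negb (holds A i))).
  unfold hR. destruct (holds B j) eqn:Eb; simpl ind.
  - rewrite (count_inv_eq1 _ k j); [lra | auto | rewrite Eb, HAj; auto].
  - apply Rle_trans with 0; [lra |].
    destruct (length _); [simpl; lra | rewrite Rinv_r; [lra | apply not_0_INR; lia]].
Qed.

(* Rule (iii), lower bound: the peer A lacking only j surely downloads when two
   draws are peers of profile A and the third holds j. *)
Lemma last_ind_lo k A j B1 B2 B3 : holds A j = false ->
  eqR B1 A * eqR B2 A * hR B3 j + eqR B1 A * hR B2 j * eqR B3 A + hR B1 j * eqR B2 A * eqR B3 A <=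
  (if negb (holds A j) && (holds B1 j || holds B2 j || holds B3 j)
        && forallb (fun l => negb (holds A l) || Nat.leb 2 (cnt3 B1 B2 B3 l)) (seq 0 k)
   then 1 else 0).
Proof.
  intros HAj. unfold eqR, hR.
  assert (Hge : forall c : bool, 0 <= (if c then 1 else 0)) by (intros []; lra).
  assert (Hall : forall B, forallb (fun l => negb (holds A l) || Nat.leb 2 (cnt3 A A B l)) (seq 0 k)
                   = true /\
                 forallb (fun l => negb (holds A l) || Nat.leb 2 (cnt3 A B A l)) (seq 0 k) = true /\
                 forallb (fun l => negb (holds A l) || Nat.leb 2 (cnt3 B A A l)) (seq 0 k) = true).
  { intros B. repeat split; apply forallb_forall; intros l _; unfold cnt3;
      destruct (holds A l), (holds B l); reflexivity. }
  destruct (prof_eqb B1 A) eqn:E1, (prof_eqb B2 A) eqn:E2, (prof_eqb B3 A) eqn:E3; simpl ind;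
    repeat match goal with H : prof_eqb _ _ = true |- _ => apply prof_eqb_spec in H; subst end;
    rewrite ?HAj; simpl negb; simpl andb; rewrite ?orb_false_l, ?orb_false_r.
  all: try (ring_simplify; match goal with |- context [if ?c then 1 else 0] => apply (Hge c) end).
  - simpl; lra.
  - destruct (holds B3 j); [| simpl; lra].
    replace (forallb _ _) with true by (symmetry; apply (proj1 (Hall B3))); simpl; lra.
  - destruct (holds B2 j); [| simpl; lra].
    replace (forallb _ _) with true by (symmetry; apply (proj1 (proj2 (Hall B2)))); simpl; lra.
  - destruct (holds B1 j); [| simpl; lra].
    replace (forallb _ _) with true by (symmetry; apply (proj2 (proj2 (Hall B1)))); simpl; lra.
Qed.

Lemma p_last_lo k x A j : In A (allp k) -> holds A j = false ->
  3 * w k x A ^ 2 * frac k x j <= p_last k x A j.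
Proof.
  intros HA HAj.
  replace (3 * w k x A ^ 2 * frac k x j) with (sum3 k (fun B1 B2 B3 =>
    w k x B1 * w k x B2 * w k x B3 *
    (eqR B1 A * eqR B2 A * hR B3 j + eqR B1 A * hR B2 j * eqR B3 A + hR B1 j * eqR B2 A * eqR B3 A))).
  - apply sum3_le. intros. apply Rmult_le_compat_l; [apply w3_nonneg | apply last_ind_lo; auto].
  - rewrite (sum3_ext _ _ (fun B1 B2 B3 =>
        w k x B1 * w k x B2 * w k x B3 * (eqR B1 A * eqR B2 A * hR B3 j)
      + (w k x B1 * w k x B2 * w k x B3 * (eqR B1 A * hR B2 j * eqR B3 A)
      + w k x B1 * w k x B2 * w k x B3 * (hR B1 j * eqR B2 A * eqR B3 A)))) by (intros; ring).
    rewrite !sum3_plus, !sum3_product, !sum_w_eq, !sum_w_holds by auto. ring.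
Qed.

(* Rule (iii), upper bound: completing requires each held chunk l to appear in
   at least two of the three draws, which has probability at most 3 q_l^2. *)
Lemma two_of_three_ind B1 B2 B3 l :
  ind (Nat.leb 2 (cnt3 B1 B2 B3 l)) <= hR B1 l * hR B2 l + hR B1 l * hR B3 l + hR B2 l * hR B3 l.
Proof. unfold cnt3, hR. destruct (holds B1 l), (holds B2 l), (holds B3 l); simpl; lra. Qed.

Lemma p_last_up k x A i l : (l < k)%nat -> holds A l = true -> p_last k x A i <= 3 * frac k x l ^ 2.
Proof.
  intros Hl HAl.
  replace (3 * frac k x l ^ 2) with (sum3 k (fun B1 B2 B3 => w k x B1 * w k x B2 * w k x B3 *
     (hR B1 l * hR B2 l + hR B1 l * hR B3 l + hR B2 l * hR B3 l))).
  - apply sum3_le. intros B1 B2 B3. apply Rmult_le_compat_l; [apply w3_nonneg |].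
    destruct (_ && _ && _) eqn:Ec; [| unfold hR; destruct (holds B1 l), (holds B2 l), (holds B3 l); simpl; lra].
    apply andb_true_iff in Ec. destruct Ec as [_ Ec]. rewrite forallb_forall in Ec.
    specialize (Ec l ltac:(apply in_seq; lia)). rewrite HAl, orb_false_l in Ec.
    assert (H := two_of_three_ind B1 B2 B3 l). rewrite Ec in H. simpl in H. lra.
  - rewrite (sum3_ext _ _ (fun B1 B2 B3 => w k x B1 * w k x B2 * w k x B3 * (hR B1 l * hR B2 l * 1)
      + (w k x B1 * w k x B2 * w k x B3 * (hR B1 l * 1 * hR B3 l)
      + w k x B1 * w k x B2 * w k x B3 * (1 * hR B2 l * hR B3 l)))) by (intros; ring).
    rewrite !sum3_plus, !sum3_product, !sum_w_holds, sum_w_1. ring.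
Qed.

(* The peers lacking chunk j split into three classes: the empty peers (rule i),
   the non-empty peers with at most k - 2 chunks (rule ii), and the peers of
   profile lack1 k j (rule iii). *)
Definition mid_lacks (k : nat) (A : profile) (j : nat) : bool :=
  negb (holds A j) && negb (prof_eqb (empty_prof k) A) && Nat.leb (nchunks A) (k - 2).
Definition Smid (k : nat) (x : state) (j : nat) : R :=
  rsum (fun A => ind (mid_lacks k A j) * peers x A) (allp k).
Definition Slast (k : nat) (x : state) (j : nat) : R := peers x (lack1 k j).

Lemma Smid_nonneg k x j : 0 <= Smid k x j.
Proof. apply rsum_nonneg. intros. apply Rmult_le_pos; [apply ind_0_1 | apply peers_nonneg]. Qed.

Lemma Slast_nonneg k x j : 0 <= Slast k x j.
Proof. apply peers_nonneg. Qed.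

Lemma lack1_not_mid k j : (2 <= k)%nat -> (j < k)%nat -> Nat.leb (nchunks (lack1 k j)) (k - 2) = false.
Proof. intros. rewrite nchunks_lack1 by lia. apply Nat.leb_gt. lia. Qed.

Lemma p_dl_lack1 k x j i : (2 <= k)%nat -> (j < k)%nat ->
  p_dl k x (lack1 k j) i = p_last k x (lack1 k j) i.
Proof.
  intros. unfold p_dl. rewrite lack1_not_mid, nchunks_lack1 by lia.
  replace (Nat.eqb (k - 1) 0) with false by (symmetry; apply Nat.eqb_neq; lia). reflexivity.
Qed.

Lemma lack_partition k B j : (2 <= k)%nat -> (j < k)%nat -> In B (allp k) ->
  1 - ind (holds B j)
  = ind (prof_eqb B (empty_prof k)) + ind (mid_lacks k B j) + ind (prof_eqb B (lack1 k j)).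
Proof.
  intros Hk Hj HB. unfold mid_lacks. rewrite (prof_eqb_sym (empty_prof k) B).
  destruct (holds B j) eqn:H; simpl negb; simpl andb.
  - rewrite !prof_eqb_neq; [simpl; lra | |];
      intros ->; [rewrite holds_lack1, Nat.eqb_refl in H by auto | rewrite holds_empty in H];
      discriminate.
  - destruct (prof_eqb B (empty_prof k)) eqn:E1.
    + apply prof_eqb_spec in E1; subst.
      rewrite lack1_not_empty by auto. simpl; lra.
    + simpl negb. simpl andb. destruct (Nat.leb (nchunks B) (k - 2)) eqn:Em.
      * rewrite prof_eqb_neq; [simpl; lra |]. intros ->. rewrite lack1_not_mid in Em by auto.
        discriminate.
      * rewrite (lack1_char k B j) by (auto; apply Nat.leb_nle; auto).
        rewrite prof_eqb_refl. simpl; lra.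
Qed.

Lemma count_lack k x j : (2 <= k)%nat -> (j < k)%nat ->
  S0r k x + Smid k x j + Slast k x j = Sr k x - INR (Schunk k x j).
Proof.
  intros Hk Hj. rewrite Sr_sum, Schunk_sum, <- rsum_minus.
  rewrite (rsum_ext _ (fun B => (if prof_eqb B (empty_prof k) then peers x B else 0) +
     ind (mid_lacks k B j) * peers x B + (if prof_eqb B (lack1 k j) then peers x B else 0))).
  - rewrite !rsum_plus, (rsum_delta (allp k) (peers x) (empty_prof k) (allp_nodup k) (empty_in k)),
      (rsum_delta (allp k) (peers x) (lack1 k j) (allp_nodup k) (lack1_in k j)),
      peers_empty by lia.
    reflexivity.
  - intros B HB. rewrite <- Rmult_minus_distr_r, (lack_partition k B j) by auto. unfold ind.
    destruct (prof_eqb B (empty_prof k)), (mid_lacks k B j), (prof_eqb B (lack1 k j)); ring.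
Qed.

(* Every non-seed peer lacks some chunk: sum_j (S - S_j) >= S - 1. *)
Lemma sum_lack k x : (1 <= k)%nat ->
  Sr k x - 1 <= rsum (fun j => Sr k x - INR (Schunk k x j)) (seq 0 k).
Proof.
  intros Hk.
  rewrite (rsum_ext _ (fun j => rsum (fun B => (1 - ind (holds B j)) * peers x B) (allp k))).
  2:{ intros j _. rewrite Sr_sum, Schunk_sum, <- rsum_minus. apply rsum_ext; intros; ring. }
  rewrite rsum_swap.
  replace (Sr k x - 1) with (rsum (fun B => (1 - ind (prof_eqb B (full_prof k))) * peers x B) (allp k)).
  2:{ rewrite (rsum_ext _ (fun B => 1 * peers x B - (if prof_eqb B (full_prof k) then peers x B else 0))).
      - rewrite rsum_minus, rsum_delta, <- Sr_sum, peers_full; auto using allp_nodup, full_prof_in.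
      - intros B _. destruct (prof_eqb B (full_prof k)); simpl; ring. }
  apply rsum_le. intros B HB. rewrite rsum_scalr. apply Rmult_le_compat_r; [apply peers_nonneg |].
  rewrite <- full_iff by auto. destruct (is_full B) eqn:Ef; simpl ind.
  - rewrite Rminus_diag. apply rsum_nonneg. intros; destruct (holds B a); simpl; lra.
  - destruct (notfull_lacks k B HB Ef) as [j0 [Hj0 Hh]].
    apply Rle_trans with (1 - ind (holds B j0)); [rewrite Hh; simpl; lra |].
    apply (rsum_ge_term (fun j => 1 - ind (holds B j))); [| apply in_seq; lia].
    intros; destruct (holds B b); simpl; lra.
Qed.

Definition rate_from (k : nat) (x : state) (A : profile) : R :=
  rsum (fun i => if holds A i then 0 else
          (1 - ind (prof_eqb (empty_prof k) A)) * rate k x A i) (seq 0 k).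

Lemma rate_from_nonneg k x A : 0 <= rate_from k x A.
Proof.
  apply rsum_nonneg. intros i _. destruct (holds A i); [lra |]. apply Rmult_le_pos.
  - destruct (prof_eqb _ _); simpl; lra.
  - apply rate_nonneg.
Qed.

Lemma rate_from_mid k x j A : (j < k)%nat -> In A (allp k) -> is_full A = false ->
  mid_lacks k A j = true -> peers x A * frac k x j <= rate_from k x A.
Proof.
  intros Hj HA Ef Hmid. unfold mid_lacks in Hmid.
  apply andb_true_iff in Hmid as [Hmid Em]. apply andb_true_iff in Hmid as [HAj E0].
  apply negb_true_iff in HAj, E0.
  assert (Hnz : Nat.eqb (nchunks A) 0 = false).
  { apply Nat.eqb_neq. intros Hz.
    rewrite (nchunks_zero k A HA Hz), prof_eqb_refl in E0. discriminate. }
  unfold rate_from. rewrite E0, (peers_nonfull x A Ef). simpl ind.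
  rewrite (rsum_ext _ (fun i => INR (x A) * (if holds A i then 0 else p_mid k x A i))).
  2:{ intros i _. destruct (holds A i); [ring |]. unfold rate, p_dl. rewrite Hnz, Em. ring. }
  rewrite rsum_scal. apply Rmult_le_compat_l; [apply pos_INR | apply p_mid_lo; auto].
Qed.

Lemma rate_from_lack1 k x j : (2 <= k)%nat -> (j < k)%nat ->
  3 * frac k x j * Slast k x j ^ 3 / Sr k x ^ 2 <= rate_from k x (lack1 k j).
Proof.
  intros Hk Hj. assert (Hn := Sr_pos k x).
  assert (HAj : holds (lack1 k j) j = false) by (rewrite holds_lack1, Nat.eqb_refl; auto).
  unfold rate_from.
  eapply Rle_trans; [| apply (rsum_ge_term (fun i => if holds (lack1 k j) i then 0 else
     (1 - ind (prof_eqb (empty_prof k) (lack1 k j))) * rate k x (lack1 k j) i)) with (a := j)].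
  - rewrite HAj, lack1_not_empty by auto. unfold rate. rewrite p_dl_lack1 by auto.
    assert (H3 := p_last_lo k x (lack1 k j) j (lack1_in k j) HAj).
    unfold w in H3. rewrite <- (peers_nonfull x _ (lack1_not_full k j Hj)).
    fold (Sr k x) (peers x (lack1 k j)) in H3. unfold Slast.
    assert (0 <= peers x (lack1 k j)) by apply peers_nonneg.
    cbn [ind]. rewrite Rminus_0_r, Rmult_1_l.
    replace (3 * frac k x j * peers x (lack1 k j) ^ 3 / Sr k x ^ 2) with
      (peers x (lack1 k j) * (3 * (peers x (lack1 k j) / Sr k x) ^ 2 * frac k x j)) by (field; lra).
    apply Rmult_le_compat_l; auto.
  - intros i _. destruct (holds (lack1 k j) i); [lra |].
    apply Rmult_le_pos; [destruct (prof_eqb _ _); simpl; lra | apply rate_nonneg].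
  - apply in_seq; lia.
Qed.

Lemma rate_from_lo k x j A : (2 <= k)%nat -> (j < k)%nat -> In A (allp k) -> is_full A = false ->
  ind (mid_lacks k A j) * peers x A * frac k x j
  + (if prof_eqb A (lack1 k j) then 3 * frac k x j * peers x A ^ 3 / Sr k x ^ 2 else 0)
  <= rate_from k x A.
Proof.
  intros Hk Hj HA Ef. assert (HIn := rate_from_nonneg k x A).
  destruct (mid_lacks k A j) eqn:Hmid; simpl ind.
  - rewrite (prof_eqb_neq A (lack1 k j)).
    + assert (H := rate_from_mid k x j A Hj HA Ef Hmid). lra.
    + intros ->. unfold mid_lacks in Hmid. rewrite lack1_not_mid, andb_false_r in Hmid by auto.
      discriminate.
  - destruct (prof_eqb A (lack1 k j)) eqn:E; [| lra].
    apply prof_eqb_spec in E. subst A. assert (H := rate_from_lack1 k x j Hk Hj).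
    unfold Slast in H. lra.
Qed.

Lemma rate_nonempty_lo k x j : (2 <= k)%nat -> (j < k)%nat ->
  frac k x j * Smid k x j + 3 * frac k x j * Slast k x j ^ 3 / Sr k x ^ 2 <= rate_nonempty k x.
Proof.
  intros Hk Hj.
  replace (frac k x j * Smid k x j + 3 * frac k x j * Slast k x j ^ 3 / Sr k x ^ 2) with
    (rsum (fun A => ind (mid_lacks k A j) * peers x A * frac k x j +
      (if prof_eqb A (lack1 k j) then 3 * frac k x j * peers x A ^ 3 / Sr k x ^ 2 else 0)) (allp k)).
  2:{ rewrite rsum_plus, rsum_delta by auto using allp_nodup, lack1_in.
      unfold Smid, Slast. rewrite rsum_scalr. ring. }
  apply rsum_le. intros A HA. destruct (is_full A) eqn:Ef.
  - unfold mid_lacks. rewrite (full_holds k A j HA Ef Hj), (prof_eqb_neq A (lack1 k j)); [simpl; lra |].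
    intros ->. rewrite lack1_not_full in Ef by auto. discriminate.
  - apply rate_from_lo; auto.
Qed.

(* Completions come only from the profiles lack1 k i, at
   rate Q_i p_last <= Q_i 3 q_l^2 for each held l; each term of the penalty is
   then bounded via s^3 e^{-s} <= 27, giving cost_complete <= 81 k^2 / S. *)

Lemma sum_events_le_all k g G :
  (forall A i, is_event k A i -> g A i <= G A i) ->
  (forall A i, In A (allp k) -> In i (seq 0 k) -> 0 <= G A i) ->
  sum_events k g <= rsum (fun A => rsum (fun i => G A i) (seq 0 k)) (allp k).
Proof.
  intros H1 H2. apply rsum_le. intros A HA. destruct (is_full A) eqn:E.
  - apply rsum_nonneg; auto.
  - apply rsum_le. intros i Hi. apply in_seq in Hi as Hi'.
    destruct (holds A i) eqn:E2; [apply H2; auto | apply H1; repeat split; auto; lia].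
Qed.

Definition chunk_cost (k : nat) (x : state) (l : nat) : R := Lterm k x l * (3 * frac k x l ^ 2).

Lemma chunk_cost_nonneg k x l : 0 <= chunk_cost k x l.
Proof. apply Rmult_le_pos; [apply Lterm_nonneg | nra]. Qed.

Lemma chunk_cost_bound k x l : chunk_cost k x l * INR (Schunk k x l) <= 81 / Sr k x.
Proof.
  unfold chunk_cost, Lterm, frac. set (s := INR (Schunk k x l)). set (n := Sr k x).
  assert (Hn : 0 < n) by apply Sr_pos.
  assert (Hs : 0 <= s) by apply pos_INR. assert (He := exp_pos s).
  assert (H3 := cube_le_exp s Hs).
  replace (n / exp s * (3 * (s / n) ^ 2) * s) with (3 * (s ^ 3 / exp s) / n)
    by (field; split; apply Rgt_not_eq; auto).
  unfold Rdiv at 2. apply Rmult_le_compat_r; [left; apply Rinv_0_lt_compat; auto |].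
  assert (s ^ 3 / exp s <= 27) by (apply div_le_l; lra). lra.
Qed.

Lemma completion_event_cost k x A i : (2 <= k)%nat -> is_event k A i ->
  rate k x A i * ind (is_full (set_true A i)) * rsum (fun j => ind (holds A j) * Lterm k x j) (seq 0 k)
  <= rsum (fun l => peers x A * ind (holds A l) * chunk_cost k x l) (seq 0 k).
Proof.
  intros Hk [HA [HfA [Hi HAi]]].
  destruct (is_full (set_true A i)) eqn:Ef; simpl ind.
  - assert (EA : A = lack1 k i) by (apply (set_true_full_lack1 k A i); auto). subst A.
    unfold rate. rewrite p_dl_lack1, (peers_nonfull x _ HfA), Rmult_1_r, <- rsum_scal by lia.
    apply rsum_le. intros l Hl. apply in_seq in Hl.
    unfold chunk_cost. destruct (holds (lack1 k i) l) eqn:Hh; simpl ind; [| lra].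
    assert (H1 := p_last_up k x (lack1 k i) i l ltac:(lia) Hh).
    assert (0 <= INR (x (lack1 k i)) * Lterm k x l)
      by (apply Rmult_le_pos; [apply pos_INR | apply Lterm_nonneg]).
    replace (INR (x (lack1 k i)) * p_last k x (lack1 k i) i * (1 * Lterm k x l)) with
      ((INR (x (lack1 k i)) * Lterm k x l) * p_last k x (lack1 k i) i) by ring.
    replace (INR (x (lack1 k i)) * 1 * (Lterm k x l * (3 * frac k x l ^ 2))) with
      ((INR (x (lack1 k i)) * Lterm k x l) * (3 * frac k x l ^ 2)) by ring.
    apply Rmult_le_compat_l; auto.
  - rewrite Rmult_0_r, Rmult_0_l. apply rsum_nonneg. intros l _.
    apply Rmult_le_pos; [apply Rmult_le_pos; [apply peers_nonneg | apply ind_0_1] |].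
    apply chunk_cost_nonneg.
Qed.

Lemma cost_complete_bound k x : (2 <= k)%nat -> cost_complete k x <= 81 * INR k ^ 2 / Sr k x.
Proof.
  intros Hk. assert (Hn := Sr_pos k x).
  eapply Rle_trans.
  { apply (sum_events_le_all k _
      (fun A i => rsum (fun l => peers x A * ind (holds A l) * chunk_cost k x l) (seq 0 k))).
    - intros A i Hev. apply completion_event_cost; auto.
    - intros A i _ _. apply rsum_nonneg. intros l _.
      apply Rmult_le_pos; [apply Rmult_le_pos; [apply peers_nonneg | apply ind_0_1] |].
      apply chunk_cost_nonneg. }
  rewrite (rsum_ext _ (fun A => INR k * rsum (fun l => peers x A * ind (holds A l) * chunk_cost k x l)
                                                (seq 0 k)))
    by (intros; rewrite rsum_const, length_seq; ring).
  rewrite rsum_scal, rsum_swap.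
  rewrite (rsum_ext _ (fun l => chunk_cost k x l * INR (Schunk k x l))).
  2:{ intros l _. rewrite Schunk_sum, <- rsum_scal. apply rsum_ext; intros; ring. }
  assert (rsum (fun l => chunk_cost k x l * INR (Schunk k x l)) (seq 0 k) <= INR k * (81 / Sr k x)).
  { replace (INR k) with (INR (length (seq 0 k))) by (rewrite length_seq; auto).
    rewrite <- rsum_const. apply rsum_le. intros; apply chunk_cost_bound. }
  assert (0 <= INR k) by apply pos_INR.
  replace (81 * INR k ^ 2 / Sr k x) with (INR k * (INR k * (81 / Sr k x))) by (field; lra).
  apply Rmult_le_compat_l; auto.
Qed.

(* For a, b, c >= 0 with u = a + b + c <= 1:  (7/9) u^3 <= a + 3 u^2 b + 3 c^3.
   Used with a, b, c the fractions of the three classes of peers lacking a chunk. *)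
Lemma cubic_ineq a b c u : 0 <= a -> 0 <= b -> 0 <= c -> u = a + b + c -> u <= 1 ->
  (7/9) * u ^ 3 <= a + 3 * u ^ 2 * b + 3 * c ^ 3.
Proof.
  intros Ha Hb Hc Hu H1. assert (0 <= u) by lra.
  assert (Hu2 : u ^ 2 <= 1) by (rewrite <- (pow1 2); apply pow_incr; lra).
  assert (Hu3 : 0 <= u ^ 2) by (apply pow_le; lra).
  assert (0 <= a * (1 - u ^ 2)) by (apply Rmult_le_pos; lra).
  assert (0 <= b * (2 * u ^ 2)) by (apply Rmult_le_pos; lra).
  assert (2 * u ^ 3 / 9 - u ^ 2 * c + 3 * c ^ 3 = (3 * c - u) ^ 2 * (c / 3 + 2 * u / 9)) by field.
  assert (0 <= (3 * c - u) ^ 2 * (c / 3 + 2 * u / 9)) by (apply Rmult_le_pos; [apply pow2_ge_0 | lra]).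
  assert (u ^ 2 * (a + b) = u ^ 2 * (u - c)) by (subst; ring).
  lra.
Qed.

Lemma INR_k_ge2 k : (2 <= k)%nat -> 2 <= INR k.
Proof. intros Hk. replace 2 with (INR 2) by (simpl; lra). apply le_INR; auto. Qed.

(* When the empty peers are at least a quarter of the peers lacking the
   chunk i0, the term (e-1) S e^{-S_0} S_0 P_0 is at most 1, as S_0^3 e^{-S_0} <= 27. *)
Lemma absorb_many_empty k n sg P u : 0 < n -> 0 <= sg -> 0 <= INR k ->
  P <= 3 * INR k * u ^ 2 -> 0 <= u -> n * u <= 4 * sg -> 2592 * INR k <= n ->
  (exp 1 - 1) * (n / exp sg) * (sg * P) <= 1.
Proof.
  intros Hn Hsg Hk HP Hu Hnu Hbig.
  assert (He := exp1_ge). assert (He3 := exp1_le3). set (E := exp sg).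
  assert (HE : 0 < E) by apply exp_pos. assert (HE3 : sg ^ 3 <= 27 * E) by (apply cube_le_exp; lra).
  assert (Hu4 : u <= 4 * sg / n) by (apply Rmult_le_reg_l with n; auto; unfold Rdiv; field_simplify; lra).
  assert (HP2 : P <= 48 * INR k * sg ^ 2 / n ^ 2).
  { eapply Rle_trans; [exact HP |].
    replace (48 * INR k * sg ^ 2 / n ^ 2) with (3 * INR k * (4 * sg / n) ^ 2) by (field; lra).
    apply Rmult_le_compat_l; [lra | apply pow_incr; lra]. }
  apply Rle_trans with ((exp 1 - 1) * (n / E) * (sg * (48 * INR k * sg ^ 2 / n ^ 2))).
  { apply Rmult_le_compat_l; [apply Rmult_le_pos; [lra | apply div_nonneg; lra] |].
    apply Rmult_le_compat_l; lra. }
  replace ((exp 1 - 1) * (n / E) * (sg * (48 * INR k * sg ^ 2 / n ^ 2)))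
    with (48 * (exp 1 - 1) * INR k * (sg ^ 3 / E) / n) by (field; lra).
  assert (Hs3 : sg ^ 3 / E <= 27) by (apply div_le_l; lra).
  assert (Hc : 0 <= 48 * (exp 1 - 1) * INR k) by nra.
  assert (48 * (exp 1 - 1) * INR k * (sg ^ 3 / E) <= 48 * (exp 1 - 1) * INR k * 27)
    by (apply Rmult_le_compat_l; auto).
  apply div_le_l; auto. nra.
Qed.

Lemma cube_le_exp2 s : 0 <= s -> 8 * s ^ 3 <= 27 * (exp s * exp s).
Proof.
  intros Hs. assert (H2 := cube_le_exp (2 * s) ltac:(lra)).
  replace (2 * s) with (s + s) in H2 by ring. rewrite exp_plus in H2.
  replace ((s + s) ^ 3) with (8 * s ^ 3) in H2 by ring. exact H2.
Qed.

Lemma Cconst_sq_bound k lam : (2 <= k)%nat -> 1 <= 3 * INR k * lam ->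
  182.25 * (exp 1 - 1) ^ 2 * exp 1 * INR k ^ 3 <= (21 * Cconst k / 128) ^ 2 * lam.
Proof.
  intros Hk Hl. assert (He := exp1_ge). assert (He3 := exp1_le3). assert (Hkr := INR_k_ge2 k Hk).
  unfold Cconst.
  replace ((21 * (108 * exp 1 * INR k ^ 3) / 128) ^ 2 * lam) with
    ((21 * 108 / 128) ^ 2 * exp 1 ^ 2 * INR k ^ 5 * (INR k * lam)) by field.
  assert (Hk3 : 8 <= INR k ^ 3) by (replace 8 with (2 ^ 3) by ring; apply pow_incr; lra).
  assert (Hk5 : INR k ^ 3 * 4 <= INR k ^ 5)
    by (replace (INR k ^ 5) with (INR k ^ 3 * (INR k * INR k)) by ring; apply Rmult_le_compat_l; nra).
  assert (Hek : 0 <= exp 1 * INR k ^ 3) by nra.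
  assert (He1 : (exp 1 - 1) ^ 2 <= 4) by nra.
  assert (0 <= (21 * 108 / 128) ^ 2 * exp 1 ^ 2) by nra.
  assert (182.25 * (exp 1 - 1) ^ 2 * exp 1 * INR k ^ 3 <= 729 * exp 1 * INR k ^ 3) by nra.
  assert (729 * exp 1 * INR k ^ 3 <= (21 * 108 / 128) ^ 2 * exp 1 ^ 2 * (INR k ^ 3 * 4) * (1 / 3))
    by nra.
  assert ((21 * 108 / 128) ^ 2 * exp 1 ^ 2 * (INR k ^ 3 * 4) * (1 / 3) <=
          (21 * 108 / 128) ^ 2 * exp 1 ^ 2 * INR k ^ 5 * (INR k * lam)).
  { apply Rle_trans with ((21 * 108 / 128) ^ 2 * exp 1 ^ 2 * INR k ^ 5 * (1 / 3)).
    - apply Rmult_le_compat_r; [lra |]. apply Rmult_le_compat_l; auto.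
    - apply Rmult_le_compat_l; [| lra]. apply Rmult_le_pos; [lra | apply pow_le; lra]. }
  lra.
Qed.

(* When the empty peers are few but S_0 P_0 >= lam/(2e), the factor
   X = (e-1) 3k S_0 e^{-S_0} is dominated by Y = (21/128) C u: indeed
   X^2 6ekS_0 <= 182.25 (e-1)^2 e k^3 <= (21C/128)^2 lam < Y^2 6ekS_0. *)
Lemma absorb_few_empty k lam sg u : (2 <= k)%nat -> 1 <= 3 * INR k * lam -> 0 < sg -> 0 <= u ->
  lam / (2 * exp 1) < sg * (3 * INR k * u ^ 2) ->
  (exp 1 - 1) * sg * 3 * INR k / exp sg <= 21 * Cconst k / 128 * u.
Proof.
  intros Hk Hl Hsg Hu Hrate.
  assert (He := exp1_ge). assert (He3 := exp1_le3). assert (Hkr := INR_k_ge2 k Hk).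
  assert (Hk3 : 0 < INR k ^ 3) by (apply pow_lt; lra).
  assert (Hlam : 0 < lam) by nra.
  assert (HE2 := cube_le_exp2 sg ltac:(lra)).
  set (E := exp sg) in *. assert (HE : 0 < E) by apply exp_pos.
  set (X := (exp 1 - 1) * sg * 3 * INR k / E). set (Y := 21 * Cconst k / 128 * u).
  assert (HC : 0 < 21 * Cconst k / 128) by (unfold Cconst; nra).
  assert (HX : 0 <= X) by (unfold X; apply div_nonneg; [repeat apply Rmult_le_pos |]; lra).
  assert (HY : 0 <= Y) by (unfold Y; apply Rmult_le_pos; lra).
  assert (Hsk : 0 < 6 * exp 1 * INR k * sg) by (repeat apply Rmult_lt_0_compat; lra).
  assert (HX2 : X ^ 2 * (6 * exp 1 * INR k * sg) <= 182.25 * (exp 1 - 1) ^ 2 * exp 1 * INR k ^ 3).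
  { replace (X ^ 2 * (6 * exp 1 * INR k * sg))
      with (54 * (exp 1 - 1) ^ 2 * exp 1 * INR k ^ 3 * (sg ^ 3 / (E * E))) by (unfold X; field; lra).
    assert (sg ^ 3 / (E * E) <= 27 / 8) by (apply div_le_l; [nra | lra]).
    assert (0 <= 54 * (exp 1 - 1) ^ 2 * exp 1 * INR k ^ 3).
    { assert (0 <= (exp 1 - 1) ^ 2) by apply pow2_ge_0. repeat apply Rmult_le_pos; lra. }
    nra. }
  assert (HYY : (21 * Cconst k / 128) ^ 2 * lam < Y ^ 2 * (6 * exp 1 * INR k * sg)).
  { unfold Y. replace ((21 * Cconst k / 128 * u) ^ 2 * (6 * exp 1 * INR k * sg)) with
      ((21 * Cconst k / 128) ^ 2 * (sg * (3 * INR k * u ^ 2) * (2 * exp 1))) by ring.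
    apply Rmult_lt_compat_l; [apply pow_lt; lra |].
    replace lam with (lam / (2 * exp 1) * (2 * exp 1)) at 1 by (field; lra).
    apply Rmult_lt_compat_r; lra. }
  assert (HCb := Cconst_sq_bound k lam Hk Hl).
  assert (X ^ 2 < Y ^ 2) by (apply Rmult_lt_reg_r with (6 * exp 1 * INR k * sg); auto; lra).
  fold X Y. nra.
Qed.

(* If the empty peers are fewer than a quarter of the peers lacking i0, the
   others (of rules ii and iii) download at total rate >= (21/64) q S u^3. *)
Lemma rate_nonempty_cubic k x i0 : (2 <= k)%nat -> (i0 < k)%nat ->
  4 * S0r k x < Sr k x * (1 - frac k x i0) ->
  21 / 64 * (frac k x i0 * Sr k x) * (1 - frac k x i0) ^ 3 <= rate_nonempty k x.
Proof.
  intros Hk Hi0 Hfew.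
  assert (Hn := Sr_pos k x). assert (Hsg := S0r_nonneg k x).
  assert (Hq := frac_bounds k x i0). assert (Hcnt := count_lack k x i0 Hk Hi0).
  assert (HRlo := rate_nonempty_lo k x i0 Hk Hi0).
  assert (HM := Smid_nonneg k x i0). assert (HQ := Slast_nonneg k x i0).
  assert (Hs : INR (Schunk k x i0) = frac k x i0 * Sr k x) by (unfold frac; field; lra).
  rewrite Hs in Hcnt.
  set (n := Sr k x) in *. set (sg := S0r k x) in *. set (q := frac k x i0) in *.
  set (M := Smid k x i0) in *. set (Q := Slast k x i0) in *. set (u := 1 - q) in *.
  set (a := M / n). set (c := Q / n). set (t := a + c).
  assert (Ha : 0 <= a) by (apply div_nonneg; lra). assert (Hc : 0 <= c) by (apply div_nonneg; lra).
  assert (Ht : t = u - sg / n).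
  { unfold t, a, c, u. replace (M / n + Q / n) with ((M + Q) / n) by (field; lra).
    replace (M + Q) with (n * (1 - q) - sg) by lra. field; lra. }
  assert (Hsn : 0 <= sg / n) by (apply div_nonneg; lra).
  assert (Hsn2 : sg / n <= u / 4) by (apply div_le_l; lra).
  assert (Hcub := cubic_ineq a 0 c t Ha ltac:(lra) Hc ltac:(unfold t; ring) ltac:(unfold u in *; lra)).
  assert (HRa : q * M + 3 * q * Q ^ 3 / n ^ 2 = q * n * (a + 3 * t ^ 2 * 0 + 3 * c ^ 3))
    by (unfold a, c; field; lra).
  assert (Ht3 : (3 * u / 4) ^ 3 <= t ^ 3) by (apply pow_incr; unfold u in *; lra).
  assert (HqN : 0 <= q * n) by nra.
  eapply Rle_trans; [| exact HRlo]. rewrite HRa.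
  apply Rle_trans with (q * n * (7 / 9 * t ^ 3)); [| apply Rmult_le_compat_l; auto].
  replace (21 / 64 * (q * n) * u ^ 3) with (q * n * (7 / 9 * ((3 * u / 4) ^ 3))) by field.
  apply Rmult_le_compat_l; auto. lra.
Qed.

Lemma p_start_le_max k x : (1 <= k)%nat -> exists i0, (i0 < k)%nat /\
  p_start k x <= 3 * INR k * frac k x i0 * (1 - frac k x i0) ^ 2.
Proof.
  intros Hk.
  destruct (rsum_le_max_term (fun i => 3 * frac k x i * (1 - frac k x i) ^ 2) k Hk) as [i0 [Hi0 Hmax]].
  exists i0. split; auto. eapply Rle_trans; [apply p_start_up |]. eapply Rle_trans; [exact Hmax |].
  right; ring.
Qed.

(* Few empty peers (4 S_0 < S u): the penalty is dominated by C/2 times the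
   download rate of the non-empty peers lacking the maximising chunk i0. *)
Lemma penalty_few_empty k lam x i0 : (2 <= k)%nat -> 1 <= 3 * INR k * lam -> (i0 < k)%nat ->
  p_start k x <= 3 * INR k * frac k x i0 * (1 - frac k x i0) ^ 2 ->
  lam / (2 * exp 1) < S0r k x * p_start k x ->
  4 * S0r k x < Sr k x * (1 - frac k x i0) ->
  (exp 1 - 1) * Lterm0 k x * (S0r k x * p_start k x) <= Cconst k / 2 * rate_nonempty k x.
Proof.
  intros Hk Hl Hi0 HP Hrate Hfew.
  assert (He := exp1_ge). assert (Hkr := INR_k_ge2 k Hk).
  assert (Hnp := Sr_pos k x). assert (Hsg := S0r_nonneg k x). assert (Hq := frac_bounds k x i0).
  assert (HRne := rate_nonempty_cubic k x i0 Hk Hi0 Hfew).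
  unfold Lterm0. set (n := Sr k x) in *. set (sg := S0r k x) in *. set (P := p_start k x) in *.
  set (q := frac k x i0) in *. set (u := 1 - q) in *.
  assert (Hu : 0 <= u) by (unfold u; lra). assert (Hu2 : 0 <= u ^ 2) by (apply pow_le; lra).
  assert (Hsgp : 0 < sg).
  { assert (0 < lam / (2 * exp 1)) by (apply Rdiv_lt_0_compat; nra).
    destruct (Rle_lt_dec sg 0); auto. replace sg with 0 in Hrate by lra. lra. }
  assert (HPu : P <= 3 * INR k * u ^ 2).
  { eapply Rle_trans; [exact HP |]. apply Rmult_le_compat_r; [lra | nra]. }
  assert (HXY := absorb_few_empty k lam sg u Hk Hl Hsgp Hu
                   ltac:(eapply Rlt_le_trans; [exact Hrate | apply Rmult_le_compat_l; lra])).
  apply Rle_trans with (n * q * u ^ 2 * ((exp 1 - 1) * sg * 3 * INR k / exp sg)).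
  { replace (n * q * u ^ 2 * ((exp 1 - 1) * sg * 3 * INR k / exp sg)) with
      ((exp 1 - 1) * (n / exp sg) * (sg * (3 * INR k * q * u ^ 2)))
      by (field; apply Rgt_not_eq, exp_pos).
    apply Rmult_le_compat_l; [apply Rmult_le_pos; [lra | apply div_nonneg; [lra | apply exp_pos]] |].
    apply Rmult_le_compat_l; lra. }
  assert (Hnqu : 0 <= n * q * u ^ 2) by (apply Rmult_le_pos; [apply Rmult_le_pos |]; lra).
  apply Rle_trans with (n * q * u ^ 2 * (21 * Cconst k / 128 * u)); [apply Rmult_le_compat_l; auto |].
  replace (n * q * u ^ 2 * (21 * Cconst k / 128 * u)) with
    (Cconst k / 2 * (21 / 64 * (q * n) * u ^ 3)) by field.
  apply Rmult_le_compat_l; [assert (HC := Cconst_nonneg k); lra | exact HRne].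
Qed.

(* The positive term (e-1) a_0 S_0 P_0 produced by empty peers is absorbed by
   half the arrival gain, half the C-weighted rate of non-empty peers, and 1. *)
Lemma empty_penalty_absorbed k lam x : (2 <= k)%nat -> 1 <= 3 * INR k * lam ->
  2592 * INR k <= Sr k x ->
  (exp 1 - 1) * Lterm0 k x * (S0r k x * p_start k x)
  <= lam * (1 - / exp 1) * Lterm0 k x / 2 + Cconst k / 2 * rate_nonempty k x + 1.
Proof.
  intros Hk Hl Hn.
  assert (He := exp1_ge). assert (Hie := inv_e_bounds). assert (Hkr := INR_k_ge2 k Hk).
  assert (Hlam : 0 < lam) by nra. assert (HCp := Cconst_nonneg k).
  assert (Hsg := S0r_nonneg k x). assert (Ha0 := Lterm0_nonneg k x).
  assert (HRne := rate_nonempty_nonneg k x).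
  assert (Hba : 0 <= lam * (1 - / exp 1) * Lterm0 k x / 2).
  { apply div_nonneg; [apply Rmult_le_pos; [apply Rmult_le_pos |] |]; lra. }
  assert (HbR : 0 <= Cconst k / 2 * rate_nonempty k x) by (apply Rmult_le_pos; lra).
  destruct (p_start_le_max k x ltac:(lia)) as [i0 [Hi0 HP]].
  assert (Hq := frac_bounds k x i0).
  destruct (Rle_dec (S0r k x * p_start k x) (lam / (2 * exp 1))) as [Hc1 | Hc1].
  { assert ((exp 1 - 1) * Lterm0 k x * (S0r k x * p_start k x)
            <= (exp 1 - 1) * Lterm0 k x * (lam / (2 * exp 1)))
      by (apply Rmult_le_compat_l; auto; apply Rmult_le_pos; lra).
    assert ((exp 1 - 1) * Lterm0 k x * (lam / (2 * exp 1)) = lam * (1 - / exp 1) * Lterm0 k x / 2)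
      by (field; lra).
    lra. }
  apply Rnot_le_lt in Hc1.
  destruct (Rle_dec (Sr k x * (1 - frac k x i0)) (4 * S0r k x)) as [Hc2 | Hc2].
  - assert (HPu : p_start k x <= 3 * INR k * (1 - frac k x i0) ^ 2).
    { eapply Rle_trans; [exact HP |]. assert (0 <= (1 - frac k x i0) ^ 2) by (apply pow_le; lra).
      apply Rmult_le_compat_r; [lra | nra]. }
    pose proof (absorb_many_empty k (Sr k x) (S0r k x) (p_start k x) (1 - frac k x i0)
                  (Sr_pos k x) Hsg ltac:(lra) HPu ltac:(lra) Hc2 Hn) as H.
    fold (Lterm0 k x) in H. lra.
  - apply Rnot_le_lt in Hc2.
    pose proof (penalty_few_empty k lam x i0 Hk Hl Hi0 HP Hc1 Hc2). lra.
Qed.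

Lemma drift_estimate k lam x : (2 <= k)%nat -> 1 <= 3 * INR k * lam ->
  2592 * INR k <= Sr k x -> 162 * INR k ^ 2 <= Sr k x ->
  drift k lam (Lyap k) x
  <= lam * (Cconst k * INR k + INR k + 1) + 2 - lam * (1 - / exp 1) * Lterm0 k x / 2
     - Cconst k / 2 * rate_tot k x - (1 - / exp 1) * gain_empty k x.
Proof.
  intros Hk Hl Hn1 Hn2.
  assert (He := exp1_ge). assert (He3 := exp1_le3). assert (Hkr := INR_k_ge2 k Hk).
  assert (Hlam : 0 < lam) by nra. assert (HCp := Cconst_nonneg k).
  assert (H1 := drift_le k lam x Hk ltac:(lra)).
  rewrite sum_events_jump in H1 by lia.
  assert (H2 := empty_penalty_absorbed k lam x Hk Hl Hn1).
  assert (Hnp := Sr_pos k x).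
  assert (H4 : (exp 1 - 1) * cost_complete k x <= 1).
  { assert (81 * INR k ^ 2 / Sr k x <= 1 / 2) by (apply div_le_l; lra).
    assert (H3 := cost_complete_bound k x Hk). assert (H0 := cost_complete_nonneg k x). nra. }
  rewrite rate_tot_split in * by lia.
  assert (Hs := Rmult_le_pos _ _ (S0r_nonneg k x) (p_start_nonneg k x)).
  assert (HR := rate_nonempty_nonneg k x).
  assert (0 <= Cconst k * (S0r k x * p_start k x)) by (apply Rmult_le_pos; auto).
  lra.
Qed.

(* The constants of the final argument: the scale L = C k lam of the arrival
   cost, the threshold M below which a chunk count is "rare", and the
   threshold Z for the number of empty peers. *)
Definition Lscale (k : nat) (lam : R) : R := Cconst k * INR k * lam.
Definition Mthr (k : nat) (lam : R) : R := 6 * lam * INR k ^ 4.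
Definition Zthr (k : nat) (lam : R) : R := 3 * Cconst k * lam * INR k ^ 2 * exp (Mthr k lam).

(* A chunk held by at most M peers, with S >= 2M: an empty peer obtains it at
   rate p_j >= 3 q_j (1 - q_j)^2 / k, so p_j S e^{-S_j} >= 3 / (4 k e^M). *)
Lemma rare_chunk_rate k x j M : (j < k)%nat -> INR (Schunk k x j) <= M -> 2 * M <= Sr k x ->
  3 / (4 * INR k * exp M) <= p_empty k x j * Lterm k x j.
Proof.
  intros Hj Hsj Hn. assert (Hk : 0 < INR k) by (apply lt_0_INR; lia).
  assert (Hpe := p_empty_lo k x j Hj). unfold Lterm. unfold frac in Hpe.
  set (n := Sr k x) in *. set (s := INR (Schunk k x j)) in *.
  assert (HeM := exp_pos M). assert (Hesp := exp_pos s).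
  assert (Hs1 : 1 <= s) by (apply Schunk_ge1; auto). assert (Hnp : 0 < n) by apply Sr_pos.
  assert (Hexps : exp s <= exp M)
    by (destruct (Rle_lt_or_eq_dec _ _ Hsj) as [h | ->]; [left; apply exp_increasing; auto | lra]).
  assert (Hqh : s / n <= 1 / 2) by (apply div_le_l; lra).
  assert (H1q : 1 / 4 <= (1 - s / n) ^ 2) by (assert (0 <= s / n) by (apply div_nonneg; lra); nra).
  eapply Rle_trans; [| apply Rmult_le_compat_r; [apply div_nonneg; lra | exact Hpe]].
  replace (3 * (s / n) * (1 - s / n) ^ 2 / INR k * (n / exp s))
    with (3 * s * (1 - s / n) ^ 2 / (INR k * exp s)) by (field; repeat split; apply Rgt_not_eq; lra).
  unfold Rdiv. apply Rle_trans with (3 * 1 * (1 / 4) * / (INR k * exp M)); [right; field; lra |].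
  apply Rmult_le_compat; [lra | left; apply Rinv_0_lt_compat; nra | nra |].
  apply Rinv_le_contravar; [nra | apply Rmult_le_compat_l; lra].
Qed.

(* Peers lacking chunk j download at total rate >= (7/9) S_j u^3, u = 1 - q_j:
   the three classes contribute S_0 3 q u^2, q M_j and 3 q Q_j^3 / S^2. *)
Lemma rate_tot_cubic k x j : (2 <= k)%nat -> (j < k)%nat ->
  INR (Schunk k x j) * (7 / 9 * (1 - frac k x j) ^ 3) <= rate_tot k x.
Proof.
  intros Hk Hj.
  assert (Hqb := frac_bounds k x j). assert (Hcnt := count_lack k x j Hk Hj).
  assert (HM := Smid_nonneg k x j). assert (HQ := Slast_nonneg k x j).
  assert (HRlo := rate_nonempty_lo k x j Hk Hj). assert (HP0 := p_start_lo k x j Hj).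
  assert (HRs := rate_tot_split k x ltac:(lia)).
  assert (Hnp := Sr_pos k x). assert (Hsg := S0r_nonneg k x).
  assert (Hqn : INR (Schunk k x j) = frac k x j * Sr k x) by (unfold frac; field; lra).
  rewrite Hqn. rewrite Hqn in Hcnt.
  set (n := Sr k x) in *. set (sg := S0r k x) in *.
  set (q := frac k x j) in *. set (M := Smid k x j) in *. set (Q := Slast k x j) in *.
  set (u := 1 - q). set (a := M / n). set (b := sg / n). set (c := Q / n).
  assert (Ha : 0 <= a) by (apply div_nonneg; lra). assert (Hb : 0 <= b) by (apply div_nonneg; lra).
  assert (Hc : 0 <= c) by (apply div_nonneg; lra).
  assert (Hu : u = a + b + c).
  { unfold u, a, b, c. replace (M / n + sg / n + Q / n) with ((sg + M + Q) / n) by (field; lra).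
    rewrite Hcnt. field; lra. }
  assert (Hcub := cubic_ineq a b c u Ha Hb Hc Hu ltac:(unfold u; lra)).
  rewrite HRs. apply Rle_trans with (sg * (3 * q * u ^ 2) + (q * M + 3 * q * Q ^ 3 / n ^ 2)).
  - replace (sg * (3 * q * u ^ 2) + (q * M + 3 * q * Q ^ 3 / n ^ 2))
      with (q * n * (a + 3 * u ^ 2 * b + 3 * c ^ 3)) by (unfold a, b, c; field; lra).
    apply Rmult_le_compat_l; [nra | lra].
  - apply Rplus_le_compat; auto. apply Rmult_le_compat_l; auto.
Qed.

(* Some chunk is lacked by nearly a 1/k fraction of the peers: the chunk j
   maximising S - S_j satisfies k (S - S_j) >= S - 1. *)
Lemma max_lack_frac k x : (1 <= k)%nat -> 100 <= Sr k x ->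
  exists j, (j < k)%nat /\ 99 / 100 <= INR k * (1 - frac k x j).
Proof.
  intros Hk Hn.
  destruct (rsum_le_max_term (fun j => Sr k x - INR (Schunk k x j)) k Hk) as [j [Hj Hmax]].
  exists j. split; auto. assert (Hsum := sum_lack k x Hk). assert (Hkr := pos_INR k).
  replace (1 - frac k x j) with ((Sr k x - INR (Schunk k x j)) / Sr k x) by (unfold frac; field; lra).
  apply Rmult_le_reg_r with (Sr k x); [lra |]. unfold Rdiv.
  replace (INR k * ((Sr k x - INR (Schunk k x j)) * / Sr k x) * Sr k x)
    with (INR k * (Sr k x - INR (Schunk k x j))) by (field; lra).
  lra.
Qed.

Lemma lam_lower k lam : (2 <= k)%nat -> lam >= 1 / (3 * INR k) -> 1 <= 3 * INR k * lam.
Proof.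
  intros Hk Hlam0. assert (Hkr := INR_k_ge2 k Hk). apply Rge_le in Hlam0.
  apply Rmult_le_compat_l with (r := 3 * INR k) in Hlam0; [| lra].
  replace (3 * INR k * (1 / (3 * INR k))) with 1 in Hlam0 by (field; lra). lra.
Qed.

Section LargePopulation.

Variables (k : nat) (lam : R).
Hypothesis Hk : (2 <= k)%nat.
Hypothesis Hl : 1 <= 3 * INR k * lam.

Lemma Cconst_ge : 2211 <= Cconst k.
Proof.
  assert (He := exp1_ge). assert (Hkr := INR_k_ge2 k Hk).
  assert (Hk3 : 8 <= INR k ^ 3) by (replace 8 with (2 ^ 3) by ring; apply pow_incr; lra).
  unfold Cconst. nra.
Qed.

Lemma scale_bounds : 737 <= Lscale k lam /\
  lam * (Cconst k * INR k + INR k + 1) + 3 <= 101 / 100 * Lscale k lam.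
Proof.
  assert (He := exp1_ge). assert (Hkr := INR_k_ge2 k Hk). assert (HC := Cconst_ge).
  assert (Hlam : 0 < lam) by nra.
  assert (HL : 737 <= Lscale k lam).
  { unfold Lscale. replace (Cconst k * INR k * lam) with (Cconst k / 3 * (3 * INR k * lam)) by field.
    assert (Cconst k / 3 * 1 <= Cconst k / 3 * (3 * INR k * lam)) by (apply Rmult_le_compat_l; lra).
    lra. }
  split; auto. unfold Lscale in *.
  assert (lam * (INR k + 1) <= (1/200) * (Cconst k * INR k * lam)).
  { assert (INR k + 1 <= (1/200) * Cconst k * INR k) by nra. nra. }
  lra.
Qed.

Lemma Mthr_nonneg : 0 <= Mthr k lam.
Proof.
  assert (Hkr := INR_k_ge2 k Hk). assert (0 <= INR k ^ 4) by (apply pow_le; lra).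
  assert (0 < lam) by nra. unfold Mthr. apply Rmult_le_pos; lra.
Qed.

Lemma large_S_bounds n : n > 4 * Cconst k * INR k * exp (Zthr k lam) ->
  2592 * INR k <= n /\ 162 * INR k ^ 2 <= n /\ 2 * Mthr k lam <= n.
Proof.
  intros Hn. assert (He := exp1_ge). assert (Hkr := INR_k_ge2 k Hk). assert (HC := Cconst_ge).
  assert (Hlam : 0 < lam) by nra. assert (HM := Mthr_nonneg).
  set (M := Mthr k lam) in *. set (Z := Zthr k lam) in *.
  assert (HeZ : 1 + Z <= exp Z) by apply exp_ineq1_le.
  assert (HeM : 1 + M <= exp M) by apply exp_ineq1_le.
  assert (Hk2 : 0 <= INR k ^ 2) by (apply pow_le; lra).
  assert (H3C : 2 <= 3 * Cconst k * lam * INR k ^ 2).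
  { replace (3 * Cconst k * lam * INR k ^ 2) with (Cconst k * INR k * (3 * INR k * lam)) by ring.
    assert (Cconst k * INR k * 1 <= Cconst k * INR k * (3 * INR k * lam))
      by (apply Rmult_le_compat_l; nra).
    nra. }
  assert (HZ : 3 * Cconst k * lam * INR k ^ 2 * (1 + M) <= Z).
  { unfold Z, Zthr. fold M. apply Rmult_le_compat_l; lra. }
  assert (HZ0 : 0 <= Z) by nra.
  assert (Hn0 : 4 * Cconst k * INR k <= n).
  { assert (4 * Cconst k * INR k * 1 <= 4 * Cconst k * INR k * exp Z) by (apply Rmult_le_compat_l; nra).
    lra. }
  split; [| split].
  - nra.
  - assert (Hk1 : 1 <= INR k ^ 2) by (rewrite <- (pow1 2); apply pow_incr; lra).
    assert (Hk4 : INR k ^ 2 <= INR k ^ 4).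
    { replace (INR k ^ 4) with (INR k ^ 2 * INR k ^ 2) by ring.
      apply Rle_trans with (INR k ^ 2 * 1); [lra | apply Rmult_le_compat_l; lra]. }
    replace (4 * Cconst k * INR k) with (432 * exp 1 * INR k ^ 4) in Hn0 by (unfold Cconst; ring).
    assert (432 * 2.56 * INR k ^ 4 <= 432 * exp 1 * INR k ^ 4)
      by (apply Rmult_le_compat_r; [apply pow_le |]; lra).
    lra.
  - assert (HeZ0 := exp_pos Z).
    assert (exp Z <= 4 * Cconst k * INR k * exp Z)
      by (apply Rle_trans with (1 * exp Z); [lra | apply Rmult_le_compat_r; nra]).
    assert (2 * (1 + M) <= Z)
      by (apply Rle_trans with (3 * Cconst k * lam * INR k ^ 2 * (1 + M)); [apply Rmult_le_compat_r |]; lra).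
    lra.
Qed.

Lemma many_empty x : Sr k x > 4 * Cconst k * INR k * exp (Zthr k lam) ->
  Lterm0 k x < 4 * Cconst k * INR k -> Zthr k lam < S0r k x.
Proof.
  intros Hn Ha0. assert (Hkr := INR_k_ge2 k Hk). assert (HC := Cconst_ge).
  assert (HE := exp_pos (S0r k x)). unfold Lterm0 in Ha0.
  assert (Sr k x < 4 * Cconst k * INR k * exp (S0r k x)).
  { apply Rmult_lt_compat_r with (r := exp (S0r k x)) in Ha0; auto.
    unfold Rdiv in Ha0. rewrite Rmult_assoc, Rinv_l, Rmult_1_r in Ha0 by lra. lra. }
  apply exp_lt_inv. apply Rmult_lt_reg_l with (4 * Cconst k * INR k); nra.
Qed.

Lemma large_a0_gain x : 4 * Cconst k * INR k <= Lterm0 k x ->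
  lam * (Cconst k * INR k + INR k + 1) + 3 <= lam * (1 - / exp 1) * Lterm0 k x / 2.
Proof.
  intros Hbig. assert (He := exp1_ge). assert (Hkr := INR_k_ge2 k Hk).
  assert (Hlam : 0 < lam) by nra. destruct scale_bounds as [HL HK]. unfold Lscale in *.
  assert (Hie2 : 3 / 5 <= 1 - / exp 1).
  { assert (/ exp 1 <= / 2.56) by (apply Rinv_le_contravar; lra). lra. }
  assert (lam * (3 / 5) * (4 * Cconst k * INR k) / 2 <= lam * (1 - / exp 1) * Lterm0 k x / 2).
  { unfold Rdiv. apply Rmult_le_compat_r; [lra |].
    apply Rmult_le_compat; [nra | nra | apply Rmult_le_compat_l; lra | lra]. }
  lra.
Qed.

(* A rare chunk (S_j <= M) among many empty peers (S_0 > Z):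
   (1 - 1/e) N >= (3/5) S_0 p_j a_j > (3/5) Z 3 / (4 k e^M) = (27/20) L. *)
Lemma rare_chunk_gain x j : (j < k)%nat -> INR (Schunk k x j) <= Mthr k lam ->
  Zthr k lam < S0r k x -> 2 * Mthr k lam <= Sr k x ->
  27 / 20 * Lscale k lam <= (1 - / exp 1) * gain_empty k x.
Proof.
  intros Hj Hsj HZ Hn3.
  assert (He := exp1_ge). assert (Hkr := INR_k_ge2 k Hk).
  assert (Hpa := rare_chunk_rate k x j (Mthr k lam) Hj Hsj Hn3).
  assert (HN1 : S0r k x * (p_empty k x j * Lterm k x j) <= gain_empty k x).
  { apply Rmult_le_compat_l; [apply S0r_nonneg |].
    apply (rsum_ge_term (fun i => p_empty k x i * Lterm k x i)); [| apply in_seq; lia].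
    intros; apply Rmult_le_pos; [apply p_empty_nonneg | apply Lterm_nonneg]. }
  set (E := exp (Mthr k lam)) in *. assert (HE := exp_pos (Mthr k lam)). fold E in HE.
  assert (HZe : Zthr k lam = 3 * Lscale k lam * INR k * E) by (unfold Zthr, Lscale, E; ring).
  assert (HN3 : 9 / 4 * Lscale k lam < S0r k x * (3 / (4 * INR k * E))).
  { replace (9 / 4 * Lscale k lam) with (Zthr k lam * (3 / (4 * INR k * E))) by (rewrite HZe; field; lra).
    apply Rmult_lt_compat_r; auto. apply Rdiv_lt_0_compat; [lra | nra]. }
  assert (S0r k x * (3 / (4 * INR k * E)) <= S0r k x * (p_empty k x j * Lterm k x j))
    by (apply Rmult_le_compat_l; [apply S0r_nonneg | exact Hpa]).
  assert (Hie2 : 3 / 5 <= 1 - / exp 1).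
  { assert (/ exp 1 <= / 2.56) by (apply Rinv_le_contravar; lra). lra. }
  assert (3 / 5 * gain_empty k x <= (1 - / exp 1) * gain_empty k x)
    by (apply Rmult_le_compat_r; [apply gain_empty_nonneg | lra]).
  lra.
Qed.

(* All chunks common (S_j > M): for the chunk j of max_lack_frac,
   R >= (7/9) M u^3 = (14/3) lam k (k u)^3 >= (9/2) lam k, i.e. (C/2) R >= (9/4) L. *)
Lemma common_chunks_rate x : (forall j, (j < k)%nat -> Mthr k lam < INR (Schunk k x j)) ->
  2592 * INR k <= Sr k x -> 9 / 4 * Lscale k lam <= Cconst k / 2 * rate_tot k x.
Proof.
  intros Hall Hn1.
  assert (Hkr := INR_k_ge2 k Hk). assert (Hlam : 0 < lam) by nra.
  destruct (max_lack_frac k x ltac:(lia) ltac:(lra)) as [j [Hj Hku]].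
  assert (HR1 := rate_tot_cubic k x j Hk Hj). assert (Hsj := Hall j Hj).
  assert (Hqb := frac_bounds k x j). set (u := 1 - frac k x j) in *.
  assert (Hu0 : 0 <= u) by (unfold u; lra).
  assert (Hku3 : 97 / 100 <= (INR k * u) ^ 3)
    by (apply Rle_trans with ((99 / 100) ^ 3); [simpl; lra | apply pow_incr; lra]).
  assert (HR2 : 9 / 2 * lam * INR k <= rate_tot k x).
  { eapply Rle_trans; [| exact HR1].
    apply Rle_trans with (Mthr k lam * (7 / 9 * u ^ 3)).
    - unfold Mthr. replace (6 * lam * INR k ^ 4 * (7 / 9 * u ^ 3))
        with (14 / 3 * lam * INR k * (INR k * u) ^ 3) by field.
      assert (0 <= 14 / 3 * lam * INR k) by nra. nra.
    - apply Rmult_le_compat_r; [| lra]. assert (0 <= u ^ 3) by (apply pow_le; lra). lra. }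
  unfold Lscale.
  replace (9 / 4 * (Cconst k * INR k * lam)) with (Cconst k / 2 * (9 / 2 * lam * INR k)) by field.
  apply Rmult_le_compat_l; [assert (HC := Cconst_nonneg k); lra | exact HR2].
Qed.

Lemma drift_gains_nonneg x : 0 <= lam * (1 - / exp 1) * Lterm0 k x / 2 /\
  0 <= Cconst k / 2 * rate_tot k x /\ 0 <= (1 - / exp 1) * gain_empty k x.
Proof.
  assert (Hkr := INR_k_ge2 k Hk). assert (Hlam : 0 < lam) by nra. assert (Hie := inv_e_bounds).
  assert (HN := gain_empty_nonneg k x). assert (HR := rate_tot_nonneg k x ltac:(lia)).
  assert (Ha0 := Lterm0_nonneg k x). assert (HC := Cconst_nonneg k).
  repeat split.
  - apply div_nonneg; [apply Rmult_le_pos; [apply Rmult_le_pos |] |]; lra.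
  - apply Rmult_le_pos; lra.
  - apply Rmult_le_pos; lra.
Qed.

End LargePopulation.

(* Theorem 3.  By drift_estimate, Delta L <= K + 2 - G with K = lam (Ck + k + 1)
   and G = lam (1-1/e) a_0 / 2 + (C/2) R + (1-1/e) N; and G >= K + 3 because
   either a_0 >= 4Ck, or S_0 > Z and then a chunk is rare (N large) or all
   chunks are common (R large).  Hence Delta L <= -1 < -1/2. *)
Theorem theorem3 (k : nat) (lam : R) :
  (2 <= k)%nat -> lam >= 1 / (3 * INR k) ->
  exists eps : R, eps > 0 /\
    forall x : state,
      INR (Stot k x) > 4 * Cconst k * INR k *
                       exp (3 * Cconst k * lam * INR k ^ 2 * exp (6 * lam * INR k ^ 4)) ->
      drift k lam (Lyap k) x < - eps.
Proof.
  intros Hk Hlam0. exists (1/2). split; [lra |]. intros x Hn.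
  assert (Hl := lam_lower k lam Hk Hlam0).
  change (Sr k x > 4 * Cconst k * INR k * exp (Zthr k lam)) in Hn.
  destruct (large_S_bounds k lam Hk Hl _ Hn) as [Hn1 [Hn2 Hn3]].
  destruct (scale_bounds k lam Hk Hl) as [HL HK].
  assert (Hmain := drift_estimate k lam x Hk Hl Hn1 Hn2).
  assert (HG := drift_gains_nonneg k lam Hk Hl x).
  enough (lam * (Cconst k * INR k + INR k + 1) + 3 <= lam * (1 - / exp 1) * Lterm0 k x / 2
            + Cconst k / 2 * rate_tot k x + (1 - / exp 1) * gain_empty k x) by lra.
  destruct (Rlt_le_dec (Lterm0 k x) (4 * Cconst k * INR k)) as [Hsmall | Hbig].
  2:{ assert (H := large_a0_gain k lam Hk Hl x Hbig). lra. }
  assert (HZ := many_empty k lam Hk x Hn Hsmall).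
  destruct (classic (exists j, (j < k)%nat /\ INR (Schunk k x j) <= Mthr k lam))
    as [[j [Hj Hsj]] | Hrare].
  - assert (H := rare_chunk_gain k lam Hk x j Hj Hsj HZ Hn3). lra.
  - assert (Hcommon : forall j, (j < k)%nat -> Mthr k lam < INR (Schunk k x j))
      by (intros j Hj; apply Rnot_le_lt; intros Hle; apply Hrare; eauto).
    assert (H := common_chunks_rate k lam Hk Hl x Hcommon Hn1). lra.
Qed.
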